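(* Let $S_2$ be a strongly $E^*$-unitary inverse semigroup with pure grading $\varphi:S_2^\times\to G$, and let $S_1\subseteq S_2$ be an inverse subsemigroup containing $0$ (an injective homomorphism preserving $0$ and all products), given the restricted pure grading. Suppose the induced inclusion of idempotent semilattices $E_1\subseteq E_2$ preserves finite covers. Then there is an induced injective morphism of partial actions $(\mathcal T_c(E_1),\Phi_1)\to(\mathcal T_c(E_2),\Phi_2)$, and consequently, for every commutative unital ring $R$, an injective $G$-graded $R$-algebra homomorphism $L_R(S_1,\varphi)\hookrightarrow L_R(S_2,\varphi)$ given by $x\delta_g\mapsto x\delta_g$ for $g\in G$ and $x\in E_{1,g}$.
   Context: An inverse semigroup with zero $S$ has unique inverses $s^*$; $E$ denotes its idempotents (a meet semilattice with $x\wedge y=xy$, least element $0$), $S^\times=S\setminus\{0\}$, $E^\times=E\setminus\{0\}$. A pure grading is a map $\varphi:S^\times\to G$ to a group with $\varphi(ab)=\varphi(a)\varphi(b)$ whenever $ab\ne0$ and $\varphi^{-1}(1_G)=E^\times$ (it restricts to a pure grading of any inverse subsemigroup containing $0$). For $S_i$ write $E_i$ for its idempotents, and $E_{i,g}=\{x\in E_i: x\le ss^*$ for some $s\in S_i$ with $\varphi(s)=g\}$ (or $\{0\}$ if no such $s$); $\phi_{i,g}:E_{i,g^{-1}}\to E_{i,g}$, $x\mapsto sxs^*$ ($s\in S_i$, $\varphi(s)=g$, $x\le s^*s$). For a meet semilattice $P$ with $0$: a filter is a subset $F$, $\emptyset\ne F\ne P$, closed upwards and under meets; $F(P)$ has topology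 generated by $\{F:x\in F\}$; tight filters $T(P)$ are the closure of the ultrafilters; $V^P_{(x:x_1,\dots,x_n)}=\{\xi\in T(P):x\in\xi, x_i\notin\xi\}$, $V_x=V_{(x:)}$; $\mathcal T_c(P)$ is the generalized Boolean algebra of compact open subsets of $T(P)$. A finite cover of $x\in P$ is a finite set of elements $\le x$ such that every $0\ne y\le x$ meets one of them nontrivially; $P_1\subseteq P_2$ preserves finite covers if every finite cover in $P_1$ of $x\in P_1$ is a finite cover of $x$ in $P_2$; then $U\mapsto\{\xi\in T(P_2):\xi\cap P_1\ne\emptyset,\ \xi\cap P_1\in U\}$ is an injective generalized Boolean algebra morphism $\mathcal T_c(P_1)\to\mathcal T_c(P_2)$ sending $V^{P_1}_{(x:x_1,\dots)}\mapsto V^{P_2}_{(x:x_1,\dots)}$. $\mathcal T_c(E_{i,g})$ is identified in this way with an ideal of $\mathcal T_c(E_i)$, and $\hat\phi_{i,g}:\mathcal T_c(E_{i,g^{-1}})\to\mathcal T_c(E_{i,g})$ is the isomorphism induced by $\phi_{i,g}$; $\Phi_i=(\{\mathcal T_c(E_{i,g})\},\{\hat\phi_{i,g}\})$ is a partial action of $G$ on $\mathcal T_c(E_i)$. A morphism of partial actions $(\mathcal B_1,\{\mathcal I_{1,t}\},\{\psi_{1,t}\})\to(\mathcal B_2,\{\mathcal I_{2,t}\},\{\psi_{2,t}\})$ is a generalized Boolean algebra morphism $f$ with $f(\mathcal I_{1,t})\subseteq\mathcal I_{2,t}$ and $f\psi_{1,t}=\psi_{2,t}f$ on $\mathcal I_{1,t^{-1}}$.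 For a partial action $\Phi=(\{\mathcal I_t\},\{\psi_t\})$ on $\mathcal B$ and commutative unital ring $R$: $\mathrm{Lc}(R,\mathcal B)$ is the $R$-algebra of functions $f:R\setminus\{0\}\to\mathcal B$ with pairwise disjoint values, almost all $0$, viewed as $\sum_r r1_{f(r)}$; $\mathrm{Lc}(R,\mathcal B)\rtimes_\Phi G$ consists of finite sums $\sum_t f_t\delta_t$, $f_t\in\mathrm{Lc}(R,\mathcal I_t)$, with $(a\delta_s)(b\delta_t)=\tilde\psi_s(\tilde\psi_{s^{-1}}(a)b)\delta_{st}$, $\tilde\psi_t(f)=\psi_t\circ f$, graded by $a\delta_g\mapsto g$. $L_R(S_i,\varphi):=\mathrm{Lc}(R,\mathcal T_c(E_i))\rtimes_{\Phi_i}G$, and $x\delta_g:=1_{V_x}\delta_g$ for $x\in E_{i,g}$. *)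

From HB Require Import structures.
From mathcomp Require Import all_boot all_order all_algebra.
From mathcomp Require Import boolp classical_sets.
Set Implicit Arguments. Unset Strict Implicit. Unset Printing Implicit Defensive.
Local Open Scope classical_set_scope.

(* list membership in Prop (no decidable equality needed) *)
Fixpoint lin {T : Type} (x : T) (l : seq T) : Prop :=
  if l is y :: l' then y = x \/ lin x l' else False.

Record Grp := {
  gcar :> Type;
  gmul : gcar -> gcar -> gcar;
  ginv : gcar -> gcar;
  gone : gcar;
  gmulA : forall a b c, gmul a (gmul b c) = gmul (gmul a b) c;
  gmul1l : forall a, gmul gone a = a;
  gmulVl : forall a, gmul (ginv a) a = gone }.
Arguments gmul {g}. Arguments ginv {g}. Arguments gone {g}.

Record InvSemigroup := {
  scar :> Type;
  smul : scar -> scar -> scar;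
  szero : scar;
  sinv : scar -> scar;
  smulA : forall a b c, smul a (smul b c) = smul (smul a b) c;
  smul0l : forall a, smul szero a = szero;
  smul0r : forall a, smul a szero = szero;
  sinv_l : forall s, smul (smul s (sinv s)) s = s;
  sinv_r : forall s, smul (smul (sinv s) s) (sinv s) = sinv s;
  sinv_uniq : forall s t, smul (smul s t) s = s -> smul (smul t s) t = t -> t = sinv s }.
Arguments smul {i}. Arguments szero {i}. Arguments sinv {i}.

Section Defs.
Variable S : InvSemigroup.

Definition idem (x : S) := smul x x = x.
Definition Eset : set S := [set x | idem x].
Definition leS (x y : S) := smul x y = x.

(* A meet semilattice with 0 is given as a subset P of idempotents of S. *)
Definition is_filter (P F : set S) :=
  [/\ F `<=` P, F !=set0, F <> P,
      (forall x y, F x -> P y -> leS x y -> F y) &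
      (forall x y, F x -> F y -> F (smul x y))].

Definition is_ultrafilter (P F : set S) :=
  is_filter P F /\ (forall F', is_filter P F' -> F `<=` F' -> F' = F).

(* basic open sets of F(P): x_i in F for xs, y_j not in F for ys *)
Definition basic_nbhd (xs ys : seq S) (F : set S) :=
  (forall x, lin x xs -> F x) /\ (forall y, lin y ys -> ~ F y).

Definition in_P (P : set S) (l : seq S) := forall x, lin x l -> P x.

(* tight filters: closure of the ultrafilters in F(P) *)
Definition Tight (P : set S) (F : set S) :=
  is_filter P F /\
  forall xs ys, in_P P xs -> in_P P ys -> basic_nbhd xs ys F ->
    exists U, is_ultrafilter P U /\ basic_nbhd xs ys U.

(* open and compact subsets of T(P) (subspace topology) *)
Definition openT (P : set S) (U : set (set S)) :=
  U `<=` Tight P /\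
  forall xi, U xi -> exists xs ys, [/\ in_P P xs, in_P P ys, basic_nbhd xs ys xi &
    forall eta, Tight P eta -> basic_nbhd xs ys eta -> U eta].

Definition compactT (P : set S) (U : set (set S)) :=
  forall C : set (set (set S)), (forall O, C O -> openT P O) ->
    (forall xi, U xi -> exists O, C O /\ O xi) ->
    exists l : seq (set (set S)), (forall O, lin O l -> C O) /\
      (forall xi, U xi -> exists O, lin O l /\ O xi).

Definition Tc (P : set S) : set (set (set S)) := [set U | openT P U /\ compactT P U].

Definition Vset (P : set S) (x : S) (ys : seq S) : set (set S) :=
  [set xi | Tight P xi /\ xi x /\ forall y, lin y ys -> ~ xi y].

Definition fcover (P : set S) (x : S) (C : seq S) :=
  (forall c, lin c C -> P c /\ leS c x) /\
  (forall y, P y -> y <> szero -> leS y x -> exists c, lin c C /\ smul y c <> szero).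

Definition pure_grading (G : Grp) (phi : S -> G) :=
  (forall a b, smul a b <> szero -> phi (smul a b) = gmul (phi a) (phi b)) /\
  (forall s, s <> szero -> (phi s = gone <-> idem s)).

Definition Eg (G : Grp) (phi : S -> G) (g : G) : set S :=
  [set x | idem x /\ (x = szero \/
     exists s, [/\ s <> szero, phi s = g & leS x (smul s (sinv s))])].

Definition phimg (G : Grp) (phi : S -> G) (g : G) (eta : set S) : set S :=
  [set y | exists x s, [/\ eta x, s <> szero, phi s = g, leS x (smul (sinv s) s) &
                          y = smul (smul s x) (sinv s)]].
End Defs.

Definition preserves_fcovers (S1 S2 : InvSemigroup) (P1 : set S1) (P2 : set S2)
  (iota : S1 -> S2) :=
  forall x C, P1 x -> fcover P1 x C -> fcover P2 (iota x) (map iota C).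

Definition Tmap (S1 S2 : InvSemigroup) (P1 : set S1) (P2 : set S2) (iota : S1 -> S2)
  (U : set (set S1)) : set (set S2) :=
  [set xi | [/\ Tight P2 xi, (exists x, P1 x /\ xi (iota x)) &
                U [set x | P1 x /\ xi (iota x)]]].

Section PartialAction.
Variables (G : Grp) (S : InvSemigroup) (phi : S -> G).

(* the ideal I_g = T_c(E_g), identified inside T_c(E) *)
Definition Iid (g : G) : set (set (set S)) :=
  [set U | exists U', Tc (Eg phi g) U' /\ U = Tmap (Eg phi g) (@Eset S) id U'].

Definition restr (Q : set S) (U : set (set S)) : set (set S) :=
  [set eta | exists xi, U xi /\ eta = xi `&` Q].

(* hat phi_g : I_{g^-1} -> I_g, transported through the identifications *)
Definition psi (g : G) (U : set (set S)) : set (set S) :=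
  Tmap (Eg phi g) (@Eset S) id
    [set phimg phi g eta | eta in restr (Eg phi (ginv g)) U].

Variable R : comPzRingType.
Local Open Scope ring_scope.

(* an element sum_r r 1_{f(r)} of LcR(R,B) is encoded by the function
   xi |-> r if xi \in f(r), 0 otherwise *)
Definition LcR (B : set (set (set S))) (h : set S -> R) :=
  (exists l : seq R, forall xi, h xi \in l) /\
  (forall r : R, r != 0 -> B (h @^-1` [set r])).

Definition psit (g : G) (h : set S -> R) : set S -> R :=
  fun eta => xget 0 [set r | r != 0 /\ psi g (h @^-1` [set r]) eta].

(* elements of LcR(R,T_c(E)) x_Phi G : finitely supported families *)
Definition LR (a : G -> set S -> R) :=
  (exists l : seq G, forall g, ~ lin g l -> a g = (fun=> 0)) /\
  (forall g, LcR (Iid g) (a g)).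

Definition homog (g : G) (c : set S -> R) : G -> set S -> R :=
  fun t => if `[< t = g >] then c else (fun=> 0).

Definition LRadd (a b : G -> set S -> R) : G -> set S -> R := fun g xi => a g xi + b g xi.
Definition LRscale (r : R) (a : G -> set S -> R) : G -> set S -> R := fun g xi => r * a g xi.

(* (a delta_s)(b delta_t) = psit_s(psit_{s^-1}(a) b) delta_{st} *)
Definition homprod (s : G) (a b : set S -> R) : set S -> R :=
  psit s (fun xi => psit (ginv s) a xi * b xi).

Definition indic (U : set (set S)) : set S -> R := fun xi => if `[< U xi >] then 1 else 0.

(* x delta_g := 1_{V_x} delta_g *)
Definition xdelta (g : G) (x : S) : G -> set S -> R := homog g (indic (Vset (@Eset S) x [::])).
End PartialAction.

From Pilot Require Import Defs.
From HB Require Import structures.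
From mathcomp Require Import all_boot all_order all_algebra.
From mathcomp Require Import boolp classical_sets.
Set Implicit Arguments. Unset Strict Implicit. Unset Printing Implicit Defensive.
Local Open Scope classical_set_scope.

(* Restricting tight filters along E1 ⊆ E2, xi |-> xi ∩ E1, maps the tight
   filters of E2 meeting E1 to tight filters of E1: tightness survives because
   finite covers in E1 stay covers in E2, and every ultrafilter of E1 is the
   restriction of an ultrafilter of E2.  Taking preimages of compact open sets
   along this map is therefore an injective morphism of generalized Boolean
   algebras; it sends V_(x:ys) to V_(x:ys), and compact open sets are finite
   unions of such basic sets.  It intertwines the partial actions because
   conjugation by iota s on E2 restricts to conjugation by s on E1, while purity
   of the grading forces conjugations by elements of the same degree to agree on
   their common domain.  The algebra map composes every homogeneous coefficient
   with the restriction map, extended by 0. *)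

Local Notation "a ⊙ b" := (smul a b) (at level 40, left associativity).

Section InverseSemigroup.
Variable S : InvSemigroup.
Implicit Types a b c d s t e f x y z : S.

Lemma sinvK s : sinv (sinv s) = s.
Proof. by symmetry; apply: sinv_uniq; [apply: sinv_r | apply: sinv_l]. Qed.

Lemma idem_sinv e : idem e -> sinv e = e.
Proof. by move=> He; symmetry; apply: sinv_uniq; rewrite He He. Qed.

Lemma smul_idemK a f : idem f -> a ⊙ f ⊙ f = a ⊙ f.
Proof. by move=> Hf; rewrite -smulA Hf. Qed.

Lemma idem_ssinv s : idem (s ⊙ sinv s).
Proof. by rewrite /idem smulA sinv_l. Qed.

Lemma idem_sinvs s : idem (sinv s ⊙ s).
Proof. by rewrite /idem smulA sinv_r. Qed.

Lemma idem0 : idem (szero : S).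
Proof. by rewrite /idem smul0l. Qed.

Lemma sinv0 : sinv (szero : S) = szero.
Proof. exact: idem_sinv idem0. Qed.

(* [f x e] is an inverse of [e f], and it is idempotent, hence so is [e f]. *)
Lemma idemM e f : idem e -> idem f -> idem (e ⊙ f).
Proof.
move=> He Hf; set x := sinv (e ⊙ f).
have Hx : f ⊙ x ⊙ e = x.
  apply: sinv_uniq.
  - by have := sinv_l (e ⊙ f); rewrite !smulA !smul_idemK.
  - have H := sinv_r (e ⊙ f); rewrite -/x !smulA in H.
    have -> : f ⊙ x ⊙ e ⊙ (e ⊙ f) ⊙ (f ⊙ x ⊙ e) = f ⊙ (x ⊙ e ⊙ f ⊙ x) ⊙ e.
      by rewrite !smulA !smul_idemK.
    by rewrite H.
have Hxx : idem x.
  have H := sinv_r (e ⊙ f); rewrite -/x !smulA in H.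
  rewrite /idem -{1 2}Hx.
  have -> : f ⊙ x ⊙ e ⊙ (f ⊙ x ⊙ e) = f ⊙ (x ⊙ e ⊙ f ⊙ x) ⊙ e by rewrite !smulA.
  by rewrite H Hx.
by have := idem_sinv Hxx; rewrite /x sinvK => ->.
Qed.

Lemma idemC e f : idem e -> idem f -> e ⊙ f = f ⊙ e.
Proof.
move=> He Hf; have Hef := idemM He Hf; have Hfe := idemM Hf He.
rewrite -(idem_sinv Hef); symmetry; apply: sinv_uniq.
- have -> : e ⊙ f ⊙ (f ⊙ e) ⊙ (e ⊙ f) = (e ⊙ f) ⊙ (e ⊙ f).
    by rewrite !smulA !smul_idemK.
  exact: Hef.
- have -> : f ⊙ e ⊙ (e ⊙ f) ⊙ (f ⊙ e) = (f ⊙ e) ⊙ (f ⊙ e).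
    by rewrite !smulA !smul_idemK.
  exact: Hfe.
Qed.

Lemma sinvM s t : sinv (s ⊙ t) = sinv t ⊙ sinv s.
Proof.
symmetry; apply: sinv_uniq.
- have -> : s ⊙ t ⊙ (sinv t ⊙ sinv s) ⊙ (s ⊙ t) =
     s ⊙ ((t ⊙ sinv t) ⊙ (sinv s ⊙ s)) ⊙ t by rewrite !smulA.
  rewrite (idemC (idem_ssinv t) (idem_sinvs s)) !smulA sinv_l.
  by rewrite -(smulA s t) -(smulA s) sinv_l.
- have -> : sinv t ⊙ sinv s ⊙ (s ⊙ t) ⊙ (sinv t ⊙ sinv s) =
     sinv t ⊙ ((sinv s ⊙ s) ⊙ (t ⊙ sinv t)) ⊙ sinv s by rewrite !smulA.
  rewrite -(idemC (idem_ssinv t) (idem_sinvs s)) !smulA sinv_r.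
  by rewrite -(smulA (sinv t) (sinv s)) -(smulA (sinv t)) sinv_r.
Qed.

Lemma ssinv_neq0 s : s <> szero -> s ⊙ sinv s <> szero.
Proof. by move=> ns e; apply: ns; rewrite -(sinv_l s) e smul0l. Qed.

Lemma sinv_neq0 s : s <> szero -> sinv s <> szero.
Proof. by move=> ns e; apply: ns; rewrite -(sinvK s) e sinv0. Qed.

Lemma leS_trans x y z : leS x y -> leS y z -> leS x z.
Proof. by rewrite /leS => Hxy Hyz; rewrite -Hxy -smulA Hyz. Qed.

Lemma le0S y : leS (szero : S) y.
Proof. by rewrite /leS smul0l. Qed.

Lemma leS0 x : leS x szero -> x = szero.
Proof. by rewrite /leS smul0r => <-. Qed.

Lemma leS_mulr x y : idem y -> leS (x ⊙ y) y.
Proof. by move=> Hy; rewrite /leS -smulA Hy. Qed.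

Lemma leS_mull x y : idem x -> idem y -> leS (x ⊙ y) x.
Proof. by move=> Hx Hy; rewrite /leS (idemC Hx Hy) -smulA Hx. Qed.

Lemma leS_meet z x y : leS z x -> leS z y -> leS z (x ⊙ y).
Proof. by rewrite /leS => Hx Hy; rewrite smulA Hx Hy. Qed.

Lemma leS_mul2 a b c d : idem b -> idem c -> leS a b -> leS c d -> leS (a ⊙ c) (b ⊙ d).
Proof.
move=> Hb Hc; rewrite /leS => Hab Hcd.
have -> : a ⊙ c ⊙ (b ⊙ d) = a ⊙ (c ⊙ b) ⊙ d by rewrite !smulA.
by rewrite (idemC Hc Hb) !smulA Hab -smulA Hcd.
Qed.

Lemma conj_expand t x y : idem x ->
  t ⊙ x ⊙ sinv t ⊙ (t ⊙ y) = t ⊙ (x ⊙ y).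
Proof.
move=> Hx; have -> : t ⊙ x ⊙ sinv t ⊙ (t ⊙ y) = t ⊙ (x ⊙ (sinv t ⊙ t)) ⊙ y.
  by rewrite !smulA.
by rewrite (idemC Hx (idem_sinvs t)) !smulA sinv_l.
Qed.

Lemma conj_mulE t a b : idem a ->
  (t ⊙ a ⊙ sinv t) ⊙ (t ⊙ b ⊙ sinv t) = t ⊙ (a ⊙ b) ⊙ sinv t.
Proof. by move=> Ha; rewrite [LHS]smulA conj_expand // smulA. Qed.

Lemma conj_idem t x : idem x -> idem (t ⊙ x ⊙ sinv t).
Proof. by move=> Hx; rewrite /idem conj_mulE // Hx. Qed.

Lemma conj_le t x : idem x -> leS (t ⊙ x ⊙ sinv t) (t ⊙ sinv t).
Proof. by move=> Hx; rewrite /leS conj_expand // smulA. Qed.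

Lemma conj_mono t a b : idem a -> leS a b -> leS (t ⊙ a ⊙ sinv t) (t ⊙ b ⊙ sinv t).
Proof. by move=> Ha ab; rewrite /leS conj_mulE // ab. Qed.

Lemma conj_cancel t z : idem z -> leS z (t ⊙ sinv t) -> t ⊙ (sinv t ⊙ z ⊙ t) ⊙ sinv t = z.
Proof.
move=> Hz; rewrite /leS => zt.
have -> : t ⊙ (sinv t ⊙ z ⊙ t) ⊙ sinv t = (t ⊙ sinv t) ⊙ z ⊙ (t ⊙ sinv t).
  by rewrite !smulA.
by rewrite -(idemC Hz (idem_ssinv t)) zt zt.
Qed.

Lemma conj_back t x : idem x -> sinv t ⊙ (t ⊙ x ⊙ sinv t) ⊙ t = sinv t ⊙ t ⊙ x.
Proof.
move=> Hx.
have -> : sinv t ⊙ (t ⊙ x ⊙ sinv t) ⊙ t = (sinv t ⊙ t) ⊙ (x ⊙ (sinv t ⊙ t)).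
  by rewrite !smulA.
by rewrite (idemC Hx (idem_sinvs t)) smulA (idem_sinvs t).
Qed.

Lemma conj_sinv_idem t x : idem x -> idem (sinv t ⊙ x ⊙ t).
Proof. by move=> Hx; have := conj_idem (sinv t) Hx; rewrite sinvK. Qed.

Lemma conj_sinv_le t x : idem x -> leS (sinv t ⊙ x ⊙ t) (sinv t ⊙ t).
Proof. by move=> Hx; have := conj_le (sinv t) Hx; rewrite sinvK. Qed.

Lemma conj_sinv_mulE t a b : idem a ->
  (sinv t ⊙ a ⊙ t) ⊙ (sinv t ⊙ b ⊙ t) = sinv t ⊙ (a ⊙ b) ⊙ t.
Proof. by move=> Ha; have := conj_mulE (sinv t) b Ha; rewrite sinvK. Qed.

Lemma conj_sinv_mono t a b : idem a -> leS a b -> leS (sinv t ⊙ a ⊙ t) (sinv t ⊙ b ⊙ t).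
Proof. by move=> Ha ab; have := conj_mono (sinv t) Ha ab; rewrite sinvK. Qed.

Lemma conjE t w : idem w -> t ⊙ w ⊙ sinv t = (t ⊙ w) ⊙ sinv (t ⊙ w).
Proof. by move=> Hw; rewrite sinvM (idem_sinv Hw) smulA -(smulA t w w) Hw. Qed.

End InverseSemigroup.

Section GroupTheory.
Variable G : Grp.
Implicit Types a b : G.

Lemma gmulV a : gmul a (ginv a) = gone.
Proof.
rewrite -[LHS]gmul1l -{1}(gmulVl (ginv a)) -gmulA (gmulA (ginv a)) gmulVl gmul1l.
exact: gmulVl.
Qed.

Lemma gmul1r a : gmul a gone = a.
Proof. by rewrite -(gmulVl a) gmulA gmulV gmul1l. Qed.

Lemma ginv_uniq a b : gmul a b = gone -> b = ginv a.
Proof. by move=> H; rewrite -[b]gmul1l -(gmulVl a) -gmulA H gmul1r. Qed.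

Lemma ginvK a : ginv (ginv a) = a.
Proof. by symmetry; apply: ginv_uniq; exact: gmulVl. Qed.

End GroupTheory.

Lemma lin_cat T (x : T) l1 l2 : lin x (l1 ++ l2) <-> lin x l1 \/ lin x l2.
Proof.
elim: l1 => [|y l1 IH] /=; first by split=> [H|[]//]; right.
rewrite IH; tauto.
Qed.

Lemma lin_filter T (x : T) (q : pred T) l : lin x (filter q l) <-> lin x l /\ q x.
Proof.
elim: l => [|y l IH] /=; first by split=> [[]|[]].
case Hq: (q y) => /=; rewrite IH; split.
- by case=> [<-|[]]; [split=> //; left | by split=> //; right].
- by case=> [[<-|Hl] qx]; [left | right].
- by case=> Hl qx; split=> //; right.
- case=> [[<-|Hl] qx]; [by rewrite Hq in qx | by split].
Qed.

Lemma lin_map T U (f : T -> U) y l : lin y (map f l) <-> exists x, lin x l /\ f x = y.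
Proof.
elim: l => [|x l IH] /=; first by split=> [[]|[x []]].
rewrite IH; split.
- by case=> [<-|[z [Hz <-]]]; [exists x; split=> //; left | exists z; split=> //; right].
- by case=> z [[<-|Hz] <-]; [left | right; exists z].
Qed.

Record meet_subsemilattice (S : InvSemigroup) (P : set S) := {
  semil_idem : forall x, P x -> idem x;
  semil0 : P szero;
  semilM : forall x y, P x -> P y -> P (x ⊙ y) }.

Lemma Eset_semil (S : InvSemigroup) : meet_subsemilattice (@Eset S).
Proof. by split=> // [|x y]; [exact: idem0 | exact: idemM]. Qed.

Section Filters.
Variables (S : InvSemigroup) (P : set S).
Implicit Types (x y z w : S) (F W : set S).

Lemma filter_sub F : is_filter P F -> F `<=` P.
Proof. by case. Qed.

Lemma filter_up F x y : is_filter P F -> F x -> P y -> leS x y -> F y.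
Proof. by case=> _ _ _ H _; apply: H. Qed.

Lemma filter_meet F x y : is_filter P F -> F x -> F y -> F (x ⊙ y).
Proof. by case=> _ _ _ _ H; apply: H. Qed.

Lemma filter_not0 F : is_filter P F -> ~ F szero.
Proof.
case=> FP _ FnP Fup _ F0; apply: FnP; apply/seteqP; split=> // y Py.
exact: Fup F0 Py (le0S y).
Qed.

Lemma filter_neq0 F x : is_filter P F -> F x -> x <> szero.
Proof. by move=> HF Fx x0; apply: (filter_not0 HF); rewrite -x0. Qed.

Lemma ultrafilter_filter W : is_ultrafilter P W -> is_filter P W.
Proof. by case. Qed.

Lemma ultrafilter_tight W : is_ultrafilter P W -> Tight P W.
Proof. by move=> HU; split; [exact: ultrafilter_filter | move=> xs ys _ _ Hb; exists W]. Qed.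

Hypothesis HP : meet_subsemilattice P.

Lemma filter_intro F x0 : F `<=` P -> F x0 -> ~ F szero ->
  (forall x y, F x -> P y -> leS x y -> F y) ->
  (forall x y, F x -> F y -> F (x ⊙ y)) -> is_filter P F.
Proof.
move=> FP Fx0 F0 Fup Fm; split=> //; first by exists x0.
by move=> FeP; apply: F0; rewrite FeP; exact: semil0 HP.
Qed.

Lemma filter_idem F x : is_filter P F -> F x -> idem x.
Proof. by move=> HF Fx; apply: (semil_idem HP); exact: filter_sub HF _ Fx. Qed.

Lemma filter_foldr_meet F x0 xs : is_filter P F -> F x0 -> (forall a, lin a xs -> F a) ->
  [/\ F (foldr smul x0 xs), leS (foldr smul x0 xs) x0 &
     forall a, lin a xs -> leS (foldr smul x0 xs) a].
Proof.
move=> HF Fx0; elim: xs => [|a xs IH] Hxs /=; first by split=> //; exact: filter_idem Fx0.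
have [H1 H2 H3] := IH (fun b Hb => Hxs b (or_intror Hb)).
have Fa := Hxs a (or_introl erefl).
have Hle : leS (a ⊙ foldr smul x0 xs) (foldr smul x0 xs) by apply/leS_mulr/(filter_idem HF).
split; first exact: filter_meet HF Fa H1.
- exact: leS_trans H2.
- move=> b [<-|Hb]; last exact: leS_trans (H3 b Hb).
  by apply: leS_mull; apply: (filter_idem HF).
Qed.

(* Otherwise [W] together with [y] generates a proper filter strictly larger than [W]. *)
Lemma ultrafilter_orth W y : is_ultrafilter P W -> P y -> ~ W y ->
  exists w, W w /\ w ⊙ y = szero.
Proof.
move=> [HW Hmax] Py nWy; apply: contra_notP nWy => Hn.
have Hn' w : W w -> w ⊙ y <> szero by move=> Ww e; apply: Hn; exists w.
have [w0 Ww0] : W !=set0 by case: HW.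
have WP := filter_sub HW; have Hy := semil_idem HP Py.
have Wi w : W w -> idem w by move=> /WP /(semil_idem HP).
pose F := [set z | P z /\ exists w, W w /\ leS (w ⊙ y) z].
have HF : is_filter P F.
  apply: (filter_intro (x0 := w0 ⊙ y)).
  - by move=> z [].
  - split; first by apply: (semilM HP) => //; apply: WP.
    by exists w0; split=> //; apply: idemM (Wi _ Ww0) Hy.
  - by move=> [_ [w [Ww /leS0 e]]]; apply: (Hn' w).
  - move=> a b [Pa [w [Ww Ha]]] Pb ab; split=> //; exists w; split=> //.
    exact: leS_trans ab.
  - move=> a b [Pa [w1 [Ww1 H1]]] [Pb [w2 [Ww2 H2]]]; split; first exact: (semilM HP).
    exists (w1 ⊙ w2); split; first exact: filter_meet.
    apply: leS_meet.
    + apply: leS_trans H1; apply: leS_mul2 => //; first exact: Wi.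
      by apply: leS_mull; apply: Wi.
    + by apply: leS_trans H2; rewrite -smulA; apply/leS_mulr/idemM => //; apply: Wi.
have WF : W `<=` F.
  by move=> w Ww; split; [exact: WP | exists w; split=> //; exact: leS_mull (Wi _ Ww) Hy].
rewrite -(Hmax _ HF WF); split=> //; exists w0; split=> //; exact: leS_mulr.
Qed.

Lemma ultrafilter_orth_seq W x C : is_ultrafilter P W -> W x ->
  (forall c, lin c C -> P c /\ ~ W c) ->
  exists w, [/\ W w, leS w x & forall c, lin c C -> w ⊙ c = szero].
Proof.
move=> HU Wx; have HW := ultrafilter_filter HU.
elim: C => [|c C IH] HC; first by exists x; split=> //; exact: filter_idem Wx.
have [w [Ww wx Hw]] := IH (fun c' Hc' => HC c' (or_intror Hc')).
have [Pc nWc] := HC c (or_introl erefl).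
have [v [Wv vc]] := ultrafilter_orth HU Pc nWc.
have [Hwi Hvi] := (filter_idem HW Ww, filter_idem HW Wv).
exists (w ⊙ v); split; first exact: filter_meet.
- by apply: leS_trans wx; exact: leS_mull.
- move=> c' [<-|Hc']; first by rewrite -smulA vc smul0r.
  have Pc' := (HC c' (or_intror Hc')).1.
  by rewrite -smulA (idemC Hvi (semil_idem HP Pc')) smulA (Hw _ Hc') smul0l.
Qed.

Lemma ultrafilter_fcover W x C : is_ultrafilter P W -> W x -> fcover P x C ->
  exists c, lin c C /\ W c.
Proof.
move=> HU Wx [HC1 HC2]; apply: contrapT => Hn.
have HW := ultrafilter_filter HU.
have [w [Ww wx Hw]] : exists w, [/\ W w, leS w x & forall c, lin c C -> w ⊙ c = szero].
  apply: ultrafilter_orth_seq => // c Hc; split; first exact: (HC1 c Hc).1.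
  by move=> Wc; apply: Hn; exists c.
have [c [Hc wc]] := HC2 w (filter_sub HW Ww) (filter_neq0 HW Ww) wx.
by apply: wc; apply: Hw.
Qed.

Lemma filter_ultrafilter_ext F : is_filter P F -> exists U, is_ultrafilter P U /\ F `<=` U.
Proof.
move=> HF.
pose Q := [set G : set S | G = set0 \/ (is_filter P G /\ F `<=` G)].
have [A [QA Amax]] : exists A, Q A /\ forall B, A `<` B -> ~ Q B.
  apply: Zorn_bigcup => F0 F0Q F0tot.
  have [[G0 [FG0 [x0 Gx0]]]|nG] := pselect (exists G, F0 G /\ G !=set0); last first.
    left; apply/seteqP; split=> // x [G FG Gx]; apply: nG; exists G; split=> //.
    by exists x.
  have good G x : F0 G -> G x -> is_filter P G /\ F `<=` G.
    by move=> FG Gx; case: (F0Q G FG) => // G0e; rewrite G0e in Gx.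
  right; split; last first.
    by apply: subset_trans (good G0 x0 FG0 Gx0).2 _; apply: bigcup_sup.
  apply: (filter_intro (x0 := x0)); last 4 first.
  - by exists G0.
  - by move=> [G FG G0']; apply: (filter_not0 (good G _ FG G0').1).
  - move=> x y [G FG Gx] Py xy; exists G => //.
    exact: filter_up (good G x FG Gx).1 Gx Py xy.
  - move=> x y [G1 FG1 Gx] [G2 FG2 Gy].
    case: (F0tot G1 G2 FG1 FG2) => H12.
    + by exists G2 => //; apply: filter_meet (good G2 y FG2 Gy).1 (H12 _ Gx) Gy.
    + by exists G1 => //; apply: filter_meet (good G1 x FG1 Gx).1 Gx (H12 _ Gy).
  - by move=> x [G FG Gx]; apply: filter_sub (good G x FG Gx).1 _ Gx.
have [A0|[HA FA]] := QA.
  exfalso; apply: (Amax F); last by right; split.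
  by rewrite A0; split=> //; case: HF => _ [x Fx] _ _ _ H; have := H x Fx.
exists A; split=> //; split=> // F' HF' AF'.
apply/seteqP; split=> //; apply: contrapT => nF'A.
by apply: (Amax F'); [split | right; split=> //; exact: subset_trans AF'].
Qed.

Lemma principal_filter z : P z -> z <> szero -> is_filter P [set y | P y /\ leS z y].
Proof.
move=> Pz nz; apply: (filter_intro (x0 := z)).
- by move=> y [].
- by split=> //; exact: (semil_idem HP).
- by move=> [_ /leS0].
- by move=> x y [Px zx] Py xy; split=> //; exact: leS_trans xy.
- by move=> x y [Px zx] [Py zy]; split; [exact: (semilM HP) | exact: leS_meet].
Qed.

Lemma ultrafilter_exists z : P z -> z <> szero -> exists U, is_ultrafilter P U /\ U z.
Proof.
move=> Pz nz; have [U [HU sU]] := filter_ultrafilter_ext (principal_filter Pz nz).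
by exists U; split=> //; apply: sU; split=> //; exact: (semil_idem HP).
Qed.

Lemma fcover_or_orth m ys : P m -> in_P P ys ->
  fcover P m (map (fun y => m ⊙ y) ys) \/
  exists z, [/\ P z, z <> szero, leS z m & forall y, lin y ys -> z ⊙ y = szero].
Proof.
move=> Pm Pys; have [Horth|Hn] := pselect (exists z,
  [/\ P z, z <> szero, leS z m & forall y, lin y ys -> z ⊙ y = szero]); [by right | left].
split.
  move=> c /lin_map [y [Hy <-]]; split; first exact: (semilM HP) (Pys y Hy).
  exact: leS_mull (semil_idem HP Pm) (semil_idem HP (Pys y Hy)).
move=> z Pz nz zm; apply: contrapT => Hc; apply: Hn; exists z; split=> // y Hy.
apply: contrapT => zy; apply: Hc; exists (m ⊙ y); split; first by apply/lin_map; exists y.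
by rewrite smulA zm.
Qed.

End Filters.

Lemma chain_upper_lin T U (F0 : set (set T)) (Z0 : set T) (f : U -> T) (L : seq U) :
  total_on F0 subset -> F0 Z0 ->
  (forall a, lin a L -> (\bigcup_(X in F0) X) (f a)) ->
  exists Z, [/\ F0 Z, Z0 `<=` Z & forall a, lin a L -> Z (f a)].
Proof.
move=> tot FZ0; elim: L => [|a L IH] HL; first by exists Z0; split=> // a [].
have [Z [FZ Z0Z HZ]] := IH (fun b Hb => HL b (or_intror Hb)).
have [Z1 FZ1 Z1a] := HL a (or_introl erefl).
case: (tot Z Z1 FZ FZ1) => H.
- exists Z1; split=> //; first exact: subset_trans H.
  by move=> b [<-|Hb]; last by apply: H; apply: HZ.
- by exists Z; split=> // b [<-|Hb]; [exact: H | exact: HZ].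
Qed.

Section FiniteSubcovers.
Variable S : InvSemigroup.
Implicit Types (C : set (set (set S))) (Y : set (set S)).

Definition fin_subcover C Y := exists l : seq (set (set S)),
  (forall O, lin O l -> C O) /\ (forall xi, Y xi -> exists O, lin O l /\ O xi).

Lemma fin_subcover_sub C Y Y' : Y `<=` Y' -> fin_subcover C Y' -> fin_subcover C Y.
Proof. by move=> YY [l [H1 H2]]; exists l; split=> // xi /YY /H2. Qed.

Lemma fin_subcoverU C Y1 Y2 :
  fin_subcover C Y1 -> fin_subcover C Y2 -> fin_subcover C (Y1 `|` Y2).
Proof.
move=> [l1 [H11 H12]] [l2 [H21 H22]]; exists (l1 ++ l2); split.
  by move=> O /lin_cat [/H11|/H21].
move=> xi [/H12|/H22] [O [HO Oxi]]; exists O; split=> //; apply/lin_cat; tauto.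
Qed.

Lemma fin_subcover0 C Y : (forall xi, ~ Y xi) -> fin_subcover C Y.
Proof. by move=> HY; exists [::]; split=> // xi /HY. Qed.

Lemma compactTU P Y1 Y2 : compactT P Y1 -> compactT P Y2 -> compactT P (Y1 `|` Y2).
Proof.
move=> H1 H2 C Copen Ccov; apply: fin_subcoverU.
  by apply: (H1 C Copen) => xi Y1xi; apply: Ccov; left.
by apply: (H2 C Copen) => xi Y2xi; apply: Ccov; right.
Qed.

Lemma compactT0 P : compactT P (set0 : set (set S)).
Proof. by move=> C _ _; exists [::]; split=> // xi []. Qed.

End FiniteSubcovers.

Section Compactness.
Variables (S : InvSemigroup) (P : set S).
Hypothesis HP : meet_subsemilattice P.

Lemma Vset_open x ys : P x -> in_P P ys -> openT P (Vset P x ys).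
Proof.
move=> Px Pys; split; first by move=> xi [].
move=> xi [Txi [xix Hys]]; exists [:: x], ys; split=> //.
- by move=> a [<-|[]].
- by split=> // a [<-|[]].
- by move=> eta Teta [H1 H2]; split=> //; split=> //; apply: H1; left.
Qed.

(* The compactness of [Vset P x ys] is proved by an Alexander-subbase style
   argument: a maximal set of literals ([true, a] for "a in xi", [false, b]
   for "b not in xi") none of whose finite parts defines a basic set with a
   finite subcover decides every element of [P] and its positive part is a
   tight filter in [Vset P x ys] that no member of the cover can contain. *)
Section VsetCompact.
Variables (x : S) (ys : seq S) (C : set (set (set S))).
Hypothesis Px : P x.

Definition lits_in (Z : set (bool * S)) (xs' ys' : seq S) :=
  (forall a, lin a xs' -> Z (true, a)) /\ (forall b, lin b ys' -> Z (false, b)).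

Definition uncovered (Z : set (bool * S)) :=
  (forall p, Z p -> P p.2) /\
  forall xs' ys', lits_in Z xs' ys' ->
    ~ fin_subcover C (Vset P x ys `&` basic_nbhd xs' ys').

Lemma uncovered_maximal_exists : ~ fin_subcover C (Vset P x ys) ->
  exists Z, uncovered Z /\ forall B, Z `<` B -> ~ uncovered B.
Proof.
move=> nK; apply: Zorn_bigcup => F0 F0B tot; split.
  by move=> p [Z FZ Zp]; apply: (F0B Z FZ).1.
move=> xs' ys' [Hxs Hys].
have [[Z0 FZ0]|nF0] := pselect (exists Z0, F0 Z0).
  have [Z1 [FZ1 _ HZ1]] := chain_upper_lin tot FZ0 Hxs.
  have [Z2 [FZ2 Z12 HZ2]] := chain_upper_lin tot FZ1 Hys.
  by apply: (F0B Z2 FZ2).2; split=> // a Ha; apply/Z12/HZ1.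
have lin_nil (l : seq S) b' : (forall a, lin a l -> (\bigcup_(X in F0) X) (b', a)) -> l = [::].
  by case: l => // a l /(_ a (or_introl erefl)) [Z FZ _]; case: nF0; exists Z.
rewrite (lin_nil _ _ Hxs) (lin_nil _ _ Hys) => Hc; apply: nK; apply: fin_subcover_sub Hc.
by move=> xi Kxi; split=> //; split=> ? [].
Qed.

Section MaximalUncovered.
Variable Z : set (bool * S).
Hypotheses (HZ : uncovered Z) (Zmax : forall B, Z `<` B -> ~ uncovered B).

Lemma uncovered_add_lit (p : bool * S) : P p.2 -> ~ Z p ->
  exists xs' ys', lits_in (Z `|` [set p]) xs' ys' /\
    fin_subcover C (Vset P x ys `&` basic_nbhd xs' ys').
Proof.
move=> Pp nZp; apply: contrapT => Hn; apply: (Zmax (B := Z `|` [set p])).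
  by split=> [q Zq|H]; [left | apply: nZp; apply: H; right].
split; first by move=> q [/HZ.1|->].
by move=> xs' ys' Hl Hc; apply: Hn; exists xs', ys'.
Qed.

Lemma uncovered_decides p : P p -> Z (true, p) \/ Z (false, p).
Proof.
move=> Pp; apply: contrapT => /not_orP [nt nf].
have [xs1 [ys1 [[H11 H12] H13]]] := uncovered_add_lit (p := (true, p)) Pp nt.
have [xs2 [ys2 [[H21 H22] H23]]] := uncovered_add_lit (p := (false, p)) Pp nf.
pose xs1' := filter (fun a => `[< Z (true, a) >]) xs1.
pose ys2' := filter (fun a => `[< Z (false, a) >]) ys2.
apply: (HZ.2 (xs1' ++ xs2) (ys1 ++ ys2')).
  split.
  - move=> a /lin_cat [/lin_filter [_ /asboolP //]|Ha].
    by case: (H21 a Ha) => // [[]].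
  - move=> b /lin_cat [Hb|/lin_filter [_ /asboolP //]].
    by case: (H12 b Hb) => // [[]].
apply: fin_subcover_sub (fin_subcoverU H13 H23).
move=> xi [Kxi [Hb1 Hb2]].
have [xip|nxip] := pselect (xi p); [left | right]; split=> //; split.
- move=> a Ha; have [Za|nZa] := pselect (Z (true, a)).
    by apply: Hb1; apply/lin_cat; left; apply/lin_filter; split=> //; apply/asboolP.
  by case: (H11 a Ha) => // -[->].
- by move=> b Hb; apply: Hb2; apply/lin_cat; left.
- by move=> a Ha; apply: Hb1; apply/lin_cat; right.
- move=> b Hb; have [Zb|nZb] := pselect (Z (false, b)).
    by apply: Hb2; apply/lin_cat; right; apply/lin_filter; split=> //; apply/asboolP.
  by case: (H22 b Hb) => // -[->].
Qed.

Lemma uncovered_witness xs' ys' : lits_in Z xs' ys' ->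
  exists xi, Vset P x ys xi /\ basic_nbhd xs' ys' xi.
Proof.
move=> Hl; apply: contrapT => Hn; apply: (HZ.2 _ _ Hl); apply: fin_subcover0.
by move=> xi [Kxi Hb]; apply: Hn; exists xi.
Qed.

Let F := [set a | Z (true, a)].

Lemma uncovered_lits_in xs' ys' : in_P P ys' -> basic_nbhd xs' ys' F -> lits_in Z xs' ys'.
Proof.
move=> Pys' [H1 H2]; split=> // b Hb.
by case: (uncovered_decides (Pys' b Hb)) => // Zb; case: (H2 b Hb).
Qed.

Lemma uncovered_x : F x.
Proof.
case: (uncovered_decides Px) => // Zx.
have Hl : lits_in Z [::] [:: x] by split=> // b [<-|[]].
have [xi [[_ [xix _]] [_ Hb]]] := uncovered_witness Hl.
by case: (Hb x (or_introl erefl)).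
Qed.

Lemma uncovered_filter : is_filter P F.
Proof.
have Kfilt xi : Vset P x ys xi -> is_filter P xi by case=> [[]].
apply: (filter_intro HP (x0 := x)).
- by move=> a Fa; exact: (HZ.1 _ Fa).
- exact: uncovered_x.
- move=> Z0; have Hl : lits_in Z [:: szero] [::] by split=> // a [<-|[]].
  have [xi [Kxi [Hb _]]] := uncovered_witness Hl.
  exact: (filter_not0 (Kfilt _ Kxi) (Hb _ (or_introl erefl))).
- move=> a b Fa Pb ab; case: (uncovered_decides Pb) => // Zb.
  have Hl : lits_in Z [:: a] [:: b] by split=> [c [<-|[]] | c [<-|[]]].
  have [xi [Kxi [Hb1 Hb2]]] := uncovered_witness Hl.
  case: (Hb2 b (or_introl erefl)).
  exact: (filter_up (Kfilt _ Kxi) (Hb1 a (or_introl erefl)) Pb ab).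
- move=> a b Fa Fb.
  have Pab : P (a ⊙ b) by apply: (semilM HP); [exact: (HZ.1 _ Fa) | exact: (HZ.1 _ Fb)].
  case: (uncovered_decides Pab) => // Zab.
  have Hl : lits_in Z [:: a; b] [:: a ⊙ b] by split=> [c [<-|[<-|[]]] | c [<-|[]]].
  have [xi [Kxi [Hb1 Hb2]]] := uncovered_witness Hl.
  case: (Hb2 _ (or_introl erefl)); apply: filter_meet (Kfilt _ Kxi) _ _.
    exact: Hb1 a (or_introl erefl).
  exact: Hb1 b (or_intror (or_introl erefl)).
Qed.

Lemma uncovered_in_Vset : Vset P x ys F.
Proof.
split; [split; first exact: uncovered_filter|split; first exact: uncovered_x].
- move=> xs' ys' Pxs' Pys' Hb.
  have [xi [[Txi _] Hxi]] := uncovered_witness (uncovered_lits_in Pys' Hb).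
  exact: Txi.2 _ _ Pxs' Pys' Hxi.
- move=> y Hy Fy.
  have Hl : lits_in Z [:: y] [::] by split=> // b [<-|[]].
  have [xi [[_ [_ Hys]] [Hb _]]] := uncovered_witness Hl.
  exact: (Hys y Hy (Hb y (or_introl erefl))).
Qed.

End MaximalUncovered.
End VsetCompact.

Lemma Vset_compact x ys : P x -> compactT P (Vset P x ys).
Proof.
move=> Px C Copen Ccov; apply: contrapT => nK.
have [Z [HZ Zmax]] := uncovered_maximal_exists nK.
have KF := uncovered_in_Vset Px HZ Zmax.
have [O [CO OF]] := Ccov _ KF.
have [xs' [ys' [Pxs' Pys' HbF HOe]]] := (Copen O CO).2 _ OF.
apply: (HZ.2 xs' ys' (uncovered_lits_in HZ Zmax Pys' HbF)).
exists [:: O]; split; first by move=> O' [<-|[]].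
by move=> xi [[Txi _] Hb]; exists O; split; [left | exact: HOe].
Qed.

End Compactness.

Section TightTopology.
Variables (S : InvSemigroup) (P : set S).
Hypothesis HP : meet_subsemilattice P.
Implicit Types (U V O : set (set S)) (l : seq (set (set S))).

Definition lin_union l : set (set S) := [set xi | exists O, lin O l /\ O xi].

Lemma lin_union_cons O l : lin_union (O :: l) = O `|` lin_union l.
Proof.
apply/seteqP; split; first by move=> xi [O' [[<-|HO'] H]]; [left | right; exists O'].
by move=> xi [H|[O' [HO' H]]]; [exists O; split=> //; left | exists O'; split=> //; right].
Qed.

Lemma Tc_lin_union l : (forall O, lin O l -> Tc P O) -> Tc P (lin_union l).
Proof.
elim: l => [|O l IH] Hl.
  have -> : lin_union [::] = set0 by apply/seteqP; split=> // xi [O []].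
  by split; [split=> // xi [] | exact: compactT0].
rewrite lin_union_cons.
have [[OT Oopen] Ocomp] := Hl O (or_introl erefl).
have [[LT Lopen] Lcomp] := IH (fun O' HO' => Hl O' (or_intror HO')).
split; last exact: compactTU.
split; first by move=> xi [/OT|/LT].
move=> xi [Oxi|Lxi].
  have [xs [ys [Pxs Pys Hb HO]]] := Oopen xi Oxi.
  by exists xs, ys; split=> // eta Teta Heta; left; apply: HO.
have [xs [ys [Pxs Pys Hb HL]]] := Lopen xi Lxi.
by exists xs, ys; split=> // eta Teta Heta; right; apply: HL.
Qed.

Lemma Vset_Tc x ys : P x -> in_P P ys -> Tc P (Vset P x ys).
Proof. by move=> Px Pys; split; [exact: Vset_open | exact: Vset_compact]. Qed.

Lemma Tc_Vset_union U : Tc P U -> exists l, (forall O, lin O l ->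
  exists m ys, [/\ P m, in_P P ys & O = Vset P m ys]) /\ U = lin_union l.
Proof.
move=> [[UT Uopen] Ucomp].
pose C := [set O | exists m ys, [/\ P m, in_P P ys, O = Vset P m ys & O `<=` U]].
have [l [lC lcov]] : fin_subcover C U.
  apply: Ucomp => [O [m [ys [Pm Pys -> _]]]|eta Ueta]; first exact: Vset_open.
  have [xs [ys [Pxs Pys Hb Hsub]]] := Uopen eta Ueta.
  have [[etaP [x0 etax0] _ _ _] _] := UT _ Ueta.
  have [Fm _ mxs] := filter_foldr_meet HP (UT _ Ueta).1 etax0 Hb.1.
  exists (Vset P (foldr smul x0 xs) ys); split; last first.
    by split; [exact: UT | split; [exact: Fm | exact: Hb.2]].
  exists (foldr smul x0 xs), ys; split=> //; first exact: etaP _ Fm.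
  move=> zeta [Tz [zm zys]]; apply: Hsub => //; split=> // a Ha.
  exact: filter_up Tz.1 zm (Pxs a Ha) (mxs a Ha).
exists l; split; first by move=> O /lC [m [ys [Pm Pys EO _]]]; exists m, ys.
apply/seteqP; split=> [xi /lcov //|xi [O [/lC [m [ys [_ _ _ OU]]] Oxi]]].
exact: OU.
Qed.

Lemma filter_neq_witness eta zeta : is_filter P eta -> is_filter P zeta -> eta <> zeta ->
  exists y, P y /\ ((zeta y /\ ~ eta y) \/ (eta y /\ ~ zeta y)).
Proof.
move=> Heta Hzeta neq; apply: contrapT => Hn; apply: neq; apply/seteqP.
split=> y Hy; apply: contrapT => nH; apply: Hn; exists y.
  by split; [exact: filter_sub Heta _ Hy | right].
by split; [exact: filter_sub Hzeta _ Hy | left].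
Qed.

Definition separated_from eta O := exists xs ys, [/\ in_P P xs, in_P P ys,
  basic_nbhd xs ys eta & forall zeta, O zeta -> ~ basic_nbhd xs ys zeta].

Lemma separated_from_lin eta l : (forall O, lin O l -> separated_from eta O) ->
  separated_from eta (lin_union l).
Proof.
elim: l => [|O l IH] Hl.
  by exists [::], [::]; split=> // zeta [O []].
rewrite lin_union_cons.
have [xs [ys [Pxs Pys Hb HbO]]] := IH (fun O' HO' => Hl O' (or_intror HO')).
have [xs' [ys' [Pxs' Pys' Hb' HO]]] := Hl O (or_introl erefl).
exists (xs' ++ xs), (ys' ++ ys); split.
- by move=> a /lin_cat [/Pxs'|/Pxs].
- by move=> a /lin_cat [/Pys'|/Pys].
- split; first by move=> a /lin_cat [/Hb'.1|/Hb.1].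
  by move=> a /lin_cat [/Hb'.2|/Hb.2].
- move=> zeta [Oz|Lz] [H1 H2].
    by apply: (HO zeta Oz); split=> a Ha; [apply: H1 | apply: H2]; apply/lin_cat; left.
  by apply: (HbO zeta Lz); split=> a Ha; [apply: H1 | apply: H2]; apply/lin_cat; right.
Qed.

Lemma Tight_mem_open y : P y -> openT P [set th | Tight P th /\ th y].
Proof.
move=> Py; split=> [th []//|th [Tth thy]]; exists [:: y], [::].
split=> //; first by move=> a [<-|[]].
- by split=> // a [<-|[]].
- by move=> et Tet [H1 _]; split=> //; apply: H1; left.
Qed.

Lemma Tight_nmem_open y : P y -> openT P [set th | Tight P th /\ ~ th y].
Proof.
move=> Py; split=> [th []//|th [Tth thy]]; exists [::], [:: y].
split=> //; first by move=> a [<-|[]].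
- by split=> // a [<-|[]].
- by move=> et Tet [_ H2]; split=> //; apply: H2; left.
Qed.

(* Compact sets are closed in the Hausdorff space [T(P)]. *)
Lemma compact_separated V eta : compactT P V -> V `<=` Tight P -> Tight P eta -> ~ V eta ->
  separated_from eta V.
Proof.
move=> Vcomp VT Teta nVeta.
have [l [lC lcov]] : fin_subcover [set O | openT P O /\ separated_from eta O] V.
  apply: Vcomp => [O []//|zeta Vzeta].
  have neq : eta <> zeta by move=> E; apply: nVeta; rewrite E.
  have [y [Py [[zy ney]|[ey nzy]]]] := filter_neq_witness (Teta.1) (VT _ Vzeta).1 neq.
  - exists [set th | Tight P th /\ th y].
    split; last by split; [exact: VT | exact: zy].
    split; first exact: Tight_mem_open.
    exists [::], [:: y]; split=> //; first by move=> a [<-|[]].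
      by split=> // a [<-|[]].
    by move=> th [_ thy] [_ H2]; apply: (H2 y (or_introl erefl)).
  - exists [set th | Tight P th /\ ~ th y].
    split; last by split; [exact: VT | exact: nzy].
    split; first exact: Tight_nmem_open.
    exists [:: y], [::]; split=> //; first by move=> a [<-|[]].
      by split=> // a [<-|[]].
    by move=> th [_ thy] [H1 _]; apply: thy; apply: H1; left.
have [xs [ys [Pxs Pys Hb HbO]]] := separated_from_lin (fun O HO => (lC O HO).2).
by exists xs, ys; split=> // zeta /lcov Lz; apply: HbO.
Qed.

End TightTopology.

Record fcover_embedding (S1 S2 : InvSemigroup) (P1 : set S1) (P2 : set S2)
    (iota : S1 -> S2) := {
  emb_semil1 : meet_subsemilattice P1;
  emb_semil2 : meet_subsemilattice P2;
  emb_inj : injective iota;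
  emb0 : iota szero = szero;
  embM : forall a b, iota (a ⊙ b) = iota a ⊙ iota b;
  emb_fcover : preserves_fcovers P1 P2 iota }.

Definition pullback (S1 S2 : InvSemigroup) (P1 : set S1) (iota : S1 -> S2)
  (xi : set S2) : set S1 := [set x | P1 x /\ xi (iota x)].

Lemma TmapE (S1 S2 : InvSemigroup) (P1 : set S1) (P2 : set S2) (iota : S1 -> S2) U xi :
  Tmap P1 P2 iota U xi <->
  [/\ Tight P2 xi, pullback P1 iota xi !=set0 & U (pullback P1 iota xi)].
Proof. by split=> -[H1 [x Hx] H3]; split=> //; exists x. Qed.

Section TmapBoolean.
Variables (S1 S2 : InvSemigroup) (P1 : set S1) (P2 : set S2) (iota : S1 -> S2).
Local Notation Tmap := (Tmap P1 P2 iota).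
Implicit Types (U V : set (set S1)).

Lemma Tmap0 : Tmap set0 = set0.
Proof. by apply/seteqP; split=> // xi []. Qed.

Lemma TmapU U V : Tmap (U `|` V) = Tmap U `|` Tmap V.
Proof.
apply/seteqP; split=> xi; first by move=> [T E [HU|HV]]; [left | right].
by case=> -[T E H]; split=> //; [left | right].
Qed.

Lemma TmapI U V : Tmap (U `&` V) = Tmap U `&` Tmap V.
Proof.
apply/seteqP; split=> xi; first by move=> [T E [HU HV]]; split.
by move=> [[T E HU] [_ _ HV]]; split.
Qed.

Lemma TmapD U V : Tmap (U `\` V) = Tmap U `\` Tmap V.
Proof.
apply/seteqP; split=> xi; first by move=> [T E [HU HV]]; split=> // -[_ _].
by move=> [[T E HU] HV]; split=> //; split=> // HV'; apply: HV.
Qed.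

End TmapBoolean.

Section Embedding.
Variables (S1 S2 : InvSemigroup) (P1 : set S1) (P2 : set S2) (iota : S1 -> S2).
Hypothesis HI : fcover_embedding P1 P2 iota.
Local Notation Tmap := (Tmap P1 P2 iota).
Local Notation pullback := (pullback P1 iota).
Implicit Types (x y m : S1) (xi : set S2) (U V : set (set S1)).

Lemma emb_eq0 x : iota x = szero -> x = szero.
Proof. by rewrite -(emb0 HI) => /(emb_inj HI). Qed.

Lemma emb_leS x y : leS x y -> leS (iota x) (iota y).
Proof. by rewrite /leS -(embM HI) => ->. Qed.

Lemma emb_in x : P1 x -> P2 (iota x).
Proof.
move=> Px; have Hc : fcover P1 x [:: x].
  split=> [c [<-|[]]|y Py ny yx]; first by split=> //; apply: (semil_idem (emb_semil1 HI)).
  by exists x; split; [left | rewrite yx].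
by have [H _] := emb_fcover HI Px Hc; exact: (H (iota x) (or_introl erefl)).1.
Qed.

Lemma emb_in_seq ys : in_P P1 ys -> in_P P2 (map iota ys).
Proof. by move=> Pys a /lin_map [y [Hy <-]]; apply/emb_in/Pys. Qed.

Lemma pullback_filter xi : is_filter P2 xi -> pullback xi !=set0 ->
  is_filter P1 (pullback xi).
Proof.
move=> Hxi [x0 [Px0 xix0]].
apply: (filter_intro (emb_semil1 HI) (x0 := x0)) => //.
- by move=> x [].
- by move=> [_]; rewrite (emb0 HI); apply: (filter_not0 Hxi).
- move=> x y [Px xix] Py xy; split=> //.
  exact: filter_up Hxi xix (emb_in Py) (emb_leS xy).
- move=> x y [Px xix] [Py xiy]; split; first exact: (semilM (emb_semil1 HI)).
  by rewrite (embM HI); exact: filter_meet Hxi xix xiy.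
Qed.

(* If [m] were covered by its meets with [ys], then so would be [iota m] in
   [P2], and an ultrafilter witnessing tightness of [xi] would contain some
   [iota (m y)], hence [iota y]. *)
Lemma pullback_tight xi : Tight P2 xi -> pullback xi !=set0 -> Tight P1 (pullback xi).
Proof.
move=> [Hxi Txi] Hex; have Hr := pullback_filter Hxi Hex.
split=> // xs ys Pxs Pys [Hb1 Hb2].
have [x0 [Px0 xix0]] := Hex.
have [[Pm xim] _ mxs] := filter_foldr_meet (emb_semil1 HI) Hr (conj Px0 xix0) Hb1.
set m := foldr smul x0 xs in Pm xim mxs.
case: (fcover_or_orth (emb_semil1 HI) Pm Pys) => [/(emb_fcover HI Pm) HC|].
  have Pys2 := emb_in_seq Pys.
  have [W [HW [HW1 HW2]]] : exists W, is_ultrafilter P2 W /\ basic_nbhd [:: iota m] (map iota ys) W.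
    apply: Txi => //; first by move=> a [<-|[]]; exact: emb_in.
    split=> [a [<-|[]] //|a /lin_map [y [Hy <-]] xiy].
    by apply: (Hb2 y Hy); split=> //; exact: Pys.
  have [c [/lin_map [c' [/lin_map [y [Hy <-]] <-]] Wc]] :=
    ultrafilter_fcover (emb_semil2 HI) HW (HW1 _ (or_introl erefl)) HC.
  exfalso; apply: (HW2 (iota y)); first by apply/lin_map; exists y.
  apply: filter_up (ultrafilter_filter HW) Wc (emb_in (Pys y Hy)) _.
  by rewrite (embM HI); apply/leS_mulr/(semil_idem (emb_semil2 HI))/emb_in/Pys.
move=> [z [Pz nz zm zys]].
have [U [HU Uz]] := ultrafilter_exists (emb_semil1 HI) Pz nz.
exists U; split=> //; split.
- move=> a Ha; apply: filter_up (ultrafilter_filter HU) Uz (Pxs a Ha) _.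
  exact: leS_trans zm (mxs a Ha).
- move=> y Hy Uy; apply: (filter_not0 (ultrafilter_filter HU)).
  by rewrite -(zys y Hy); exact: filter_meet (ultrafilter_filter HU) Uz Uy.
Qed.

Lemma Tmap_Vset m ys : P1 m -> in_P P1 ys -> Tmap (Vset P1 m ys) = Vset P2 (iota m) (map iota ys).
Proof.
move=> Pm Pys; apply/seteqP; split.
- move=> xi [Txi _ [_ [[_ xim] Hys]]]; split=> //; split=> //.
  move=> a /lin_map [y [Hy <-]] xiy; apply: (Hys y Hy); split=> //; exact: Pys.
- move=> xi [Txi [xim Hys]].
  have Hex : pullback xi !=set0 by exists m.
  split=> //.
  split; first exact: pullback_tight.
  split; first by split.
  by move=> y Hy [_ xiy]; apply: (Hys (iota y)) => //; apply/lin_map; exists y.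
Qed.

Lemma Tmap_lin_union l : Tmap (lin_union l) = lin_union (map Tmap l).
Proof.
apply/seteqP; split=> xi.
  move=> [Txi Hex [O [HO Oxi]]]; exists (Tmap O); split; first by apply/lin_map; exists O.
  by split.
by move=> [_ [/lin_map [O [HO <-]] [Txi Hex Oxi]]]; split=> //; exists O.
Qed.

Lemma Tmap_Tc U : Tc P1 U -> Tc P2 (Tmap U).
Proof.
move=> /(Tc_Vset_union (emb_semil1 HI)) [l [lV ->]].
rewrite Tmap_lin_union; apply: Tc_lin_union => O /lin_map [O' [/lV [m [ys [Pm Pys ->]]] <-]].
by rewrite Tmap_Vset //; apply: Vset_Tc; [exact: emb_semil2 HI | exact: emb_in | exact: emb_in_seq].
Qed.

Lemma ultrafilter_pullback w : is_ultrafilter P1 w ->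
  exists W, is_ultrafilter P2 W /\ pullback W = w.
Proof.
move=> Hw; have Hwf := ultrafilter_filter Hw.
have Hi2 := semil_idem (emb_semil2 HI).
have wP2 a : w a -> P2 (iota a) by move=> /(filter_sub Hwf) /emb_in.
have [_ [w0 ww0] _ _ _] := Hwf.
pose F := [set y | P2 y /\ exists a, w a /\ leS (iota a) y].
have HF : is_filter P2 F.
  apply: (filter_intro (emb_semil2 HI) (x0 := iota w0)).
  - by move=> y [].
  - by split; [exact: wP2 | exists w0; split=> //; exact/Hi2/wP2].
  - by move=> [_ [a [wa /leS0 /emb_eq0 a0]]]; apply: (filter_not0 Hwf); rewrite -a0.
  - by move=> x y [Px [a [wa ax]]] Py xy; split=> //; exists a; split=> //; exact: leS_trans xy.
  - move=> x y [Px [a [wa ax]]] [Py [b [wb bx]]]; split; first exact: (semilM (emb_semil2 HI)).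
    exists (a ⊙ b); split; first exact: filter_meet Hwf wa wb.
    by rewrite (embM HI); apply: (leS_mul2 _ _ ax bx); [exact: Hi2 | exact/Hi2/wP2].
have [W [HW FW]] := filter_ultrafilter_ext (emb_semil2 HI) HF.
have wW : w `<=` pullback W.
  move=> a wa; split; first exact: filter_sub Hwf _ wa.
  by apply: FW; split; [exact: wP2 | exists a; split=> //; exact/Hi2/wP2].
exists W; split=> //; apply: Hw.2 => //; apply: pullback_filter (ultrafilter_filter HW) _.
by exists w0; exact: wW.
Qed.

(* A tight filter of [U] outside [V] has a basic neighbourhood missing [V];
   it contains an ultrafilter, whose extension to [P2] lies in [Tmap U] but
   not in [Tmap V]. *)
Lemma Tmap_subset U V : Tc P1 U -> Tc P1 V -> Tmap U `<=` Tmap V -> U `<=` V.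
Proof.
move=> [[UT Uopen] _] [[VT _] Vcomp] HUV eta Ueta; apply: contrapT => nVeta.
have [xs [ys [Pxs Pys Hb HbV]]] := compact_separated Vcomp VT (UT _ Ueta) nVeta.
have [xsU [ysU [PxsU PysU HbU HU]]] := Uopen eta Ueta.
have [om [Hom [Hom1 Hom2]]] :
    exists om, is_ultrafilter P1 om /\ basic_nbhd (xs ++ xsU) (ys ++ ysU) om.
  apply: (UT _ Ueta).2.
  - by move=> a /lin_cat [/Pxs|/PxsU].
  - by move=> a /lin_cat [/Pys|/PysU].
  split; first by move=> a /lin_cat [/Hb.1|/HbU.1].
  by move=> a /lin_cat [/Hb.2|/HbU.2].
have Uom : U om.
  apply: HU; first exact: ultrafilter_tight.
  by split=> a Ha; [apply: Hom1 | apply: Hom2]; apply/lin_cat; right.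
have nVom : ~ V om.
  move=> /HbV; apply.
  by split=> a Ha; [apply: Hom1 | apply: Hom2]; apply/lin_cat; left.
have [W [HW EW]] := ultrafilter_pullback Hom.
have [_ [w0 omw0] _ _ _] := ultrafilter_filter Hom.
have : Tmap U W.
  apply/TmapE; split; [exact: ultrafilter_tight | | by rewrite EW].
  by rewrite EW; exists w0.
by move=> /HUV /TmapE [_ _]; rewrite EW.
Qed.

Lemma Tmap_inj U V : Tc P1 U -> Tc P1 V -> Tmap U = Tmap V -> U = V.
Proof.
by move=> HU HV E; apply/seteqP; split; apply: Tmap_subset; rewrite // E.
Qed.

End Embedding.

Section ConjFilter.
Variable S : InvSemigroup.
Implicit Types (t w x y z : S) (xi : set S).
Local Notation E := (@Eset S).

(* The filter generated by [t^* xi t], i.e. the preimage of [xi] under [x |-> t x t^*]. *)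
Definition conj_filter xi t : set S :=
  [set y | idem y /\ exists z, [/\ xi z, leS z (t ⊙ sinv t) & leS (sinv t ⊙ z ⊙ t) y]].

Lemma conj_filter_back xi t y : is_filter E xi -> conj_filter xi t y -> xi (t ⊙ y ⊙ sinv t).
Proof.
move=> Hxi [Hy [z [xiz zt zy]]].
have Hz : idem z by apply: (filter_sub Hxi).
apply: filter_up Hxi xiz (conj_idem t Hy) _.
by rewrite -{1}(conj_cancel Hz zt); apply: conj_mono zy; apply: conj_sinv_idem.
Qed.

Lemma conj_filter_in xi t w : xi w -> idem w -> leS w (t ⊙ sinv t) ->
  conj_filter xi t (sinv t ⊙ w ⊙ t).
Proof. by move=> xiw Hw wt; have Hc := conj_sinv_idem t Hw; split=> //; exists w. Qed.

Lemma conj_filter_dom xi t : xi (t ⊙ sinv t) -> conj_filter xi t (sinv t ⊙ t).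
Proof.
move=> xit; split; first exact: idem_sinvs.
by exists (t ⊙ sinv t); split=> //; [exact: idem_ssinv | rewrite /leS !smulA !sinv_r].
Qed.

Lemma conj_filter_filter xi t : is_filter E xi -> xi (t ⊙ sinv t) ->
  is_filter E (conj_filter xi t).
Proof.
move=> Hxi xit; apply: (filter_intro (Eset_semil S) (x0 := sinv t ⊙ t)).
- by move=> y [].
- exact: conj_filter_dom.
- move=> [_ [z [xiz zt /leS0 z0]]]; apply: (filter_not0 Hxi).
  have Hz : idem z by apply: (filter_sub Hxi).
  by rewrite -(conj_cancel Hz zt) z0 smul0r smul0l in xiz.
- move=> a b [Ha [z [xiz zt za]]] Hb ab; split=> //; exists z; split=> //; exact: leS_trans ab.
- move=> a b [Ha [z1 [xiz1 z1t z1a]]] [Hb [z2 [xiz2 z2t z2b]]]; split; first exact: idemM.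
  have Hz1 : idem z1 by apply: (filter_sub Hxi).
  have Hz2 : idem z2 by apply: (filter_sub Hxi).
  exists (z1 ⊙ z2); split; first exact: filter_meet Hxi xiz1 xiz2.
    by apply: leS_trans z1t; exact: leS_mull.
  by rewrite -conj_sinv_mulE //; apply: leS_mul2 => //; exact: conj_sinv_idem.
Qed.

(* Conjugating back by [t^*] recovers [om], so maximality transfers. *)
Lemma conj_filter_ultra om t : is_ultrafilter E om -> om (t ⊙ sinv t) ->
  is_ultrafilter E (conj_filter om t).
Proof.
move=> Hom omt; have Homf := ultrafilter_filter Hom.
split; first exact: conj_filter_filter; move=> F HF sub.
have Ftt : F (sinv t ⊙ t) by apply/sub/conj_filter_dom.
have HF' : is_filter E (conj_filter F (sinv t)) by apply: conj_filter_filter; rewrite // sinvK.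
have omF' : om `<=` conj_filter F (sinv t).
  move=> w omw; have Hw : idem w by apply: (filter_sub Homf).
  split=> //; exists (sinv t ⊙ w ⊙ t); rewrite sinvK; split.
  - apply: sub.
    have -> : sinv t ⊙ w ⊙ t = sinv t ⊙ (w ⊙ (t ⊙ sinv t)) ⊙ t.
      by rewrite !smulA -(smulA _ t (sinv t)) -(smulA _ (t ⊙ sinv t)) sinv_l.
    apply: conj_filter_in; first exact: filter_meet Homf omw omt.
      exact: idemM (idem_ssinv t).
    exact: leS_mulr (idem_ssinv t).
  - exact: conj_sinv_le.
  - by have := conj_back (sinv t) Hw; rewrite sinvK => ->; exact: leS_mulr.
have F'om : conj_filter F (sinv t) = om by apply: Hom.2.
apply/seteqP; split=> // y Fy; have Hy : idem y by apply: (filter_sub HF).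
set y' := y ⊙ (sinv t ⊙ t).
have Hy' : idem y' := idemM Hy (idem_sinvs t).
have omy' : om (t ⊙ y' ⊙ sinv t).
  rewrite -F'om; have := conj_filter_in (t := sinv t) (filter_meet HF Fy Ftt) Hy'.
  by rewrite sinvK; apply; exact: leS_mulr (idem_sinvs t).
split=> //; exists (t ⊙ y' ⊙ sinv t); split=> //; first exact: conj_le.
rewrite conj_back //; apply: leS_trans (leS_mulr _ Hy') _.
exact: leS_mull Hy (idem_sinvs t).
Qed.

Lemma conj_filter_tight xi t : Tight E xi -> xi (t ⊙ sinv t) -> Tight E (conj_filter xi t).
Proof.
move=> [Hxi Txi] xit; split; first exact: conj_filter_filter.
move=> xs ys Pxs Pys [Hb1 Hb2].
have [om [Hom [Hom1 Hom2]]] : exists U, is_ultrafilter E U /\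
   basic_nbhd (t ⊙ sinv t :: map (fun x => t ⊙ x ⊙ sinv t) xs)
     (map (fun y => t ⊙ y ⊙ sinv t) ys) U.
  apply: Txi.
  - move=> a [<-|/lin_map [x [Hx <-]]]; [exact: idem_ssinv | exact: conj_idem (Pxs x Hx)].
  - by move=> a /lin_map [x [Hx <-]]; exact: conj_idem (Pys x Hx).
  split; first by move=> a [<-|/lin_map [x [Hx <-]]] //; exact: conj_filter_back Hxi (Hb1 x Hx).
  move=> a /lin_map [y [Hy <-]] xiy; apply: (Hb2 y Hy).
  have Hyi : idem y := Pys y Hy.
  split=> //; exists (t ⊙ y ⊙ sinv t); split=> //; first exact: conj_le.
  by rewrite conj_back //; exact: leS_mulr.
exists (conj_filter om t); split; first by apply: conj_filter_ultra => //; apply: Hom1; left.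
split.
  move=> x Hx; have Hxx : idem x := Pxs x Hx.
  split=> //; exists (t ⊙ x ⊙ sinv t); split; last by rewrite conj_back //; exact: leS_mulr.
  - by apply: Hom1; right; apply/lin_map; exists x.
  - exact: conj_le.
move=> y Hy omy; apply: (Hom2 (t ⊙ y ⊙ sinv t)); first by apply/lin_map; exists y.
exact: conj_filter_back (ultrafilter_filter Hom) omy.
Qed.

End ConjFilter.

Section Grading.
Variables (S : InvSemigroup) (G : Grp) (phi : S -> G).
Hypothesis Hphi : pure_grading phi.
Implicit Types (s t r q w x y z : S) (g : G).

Lemma grade_idem e : e <> szero -> idem e -> phi e = gone.
Proof. by move=> ne He; apply/(Hphi.2 e ne). Qed.

Lemma grade_sinv s : s <> szero -> phi (sinv s) = ginv (phi s).
Proof.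
move=> ns; apply: ginv_uniq; rewrite -(Hphi.1 _ _ (ssinv_neq0 ns)).
exact: grade_idem (ssinv_neq0 ns) (idem_ssinv s).
Qed.

(* [s w r^*] has degree [1], hence is idempotent because the grading is pure. *)
Lemma grading_agree s r w : phi s = phi r -> idem w ->
  leS w (sinv s ⊙ s) -> leS w (sinv r ⊙ r) -> s ⊙ w = r ⊙ w.
Proof.
move=> Hsr Hw ws wr.
have [->|nw] := pselect (w = szero); first by rewrite !smul0r.
have Hw_s : sinv s ⊙ s ⊙ w = w by rewrite -(idemC Hw (idem_sinvs s)).
set p := s ⊙ w ⊙ sinv r.
have psw : p ⊙ (r ⊙ w) = s ⊙ w.
  by rewrite /p !smulA -(smulA (s ⊙ w) (sinv r) r) -(smulA s w) wr (smul_idemK _ Hw).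
have nsw : s ⊙ w <> szero by move=> e; apply: nw; rewrite -Hw_s -smulA e smul0r.
have np : p <> szero by move=> e; apply: nsw; rewrite -psw e smul0l.
have nr : r <> szero by move=> e; apply: np; rewrite /p e sinv0 smul0r.
have Hp : idem p.
  apply/(Hphi.2 p np); rewrite /p (Hphi.1 _ _ np) (Hphi.1 _ _ nsw).
  by rewrite (grade_idem nw Hw) gmul1r grade_sinv // Hsr gmulV.
have prw : p ⊙ (s ⊙ w) = r ⊙ w.
  rewrite -{1}(idem_sinv Hp) /p !sinvM sinvK (idem_sinv Hw) !smulA.
  have -> : r ⊙ w ⊙ sinv s ⊙ s ⊙ w = r ⊙ w ⊙ (sinv s ⊙ s ⊙ w) by rewrite !smulA.
  by rewrite Hw_s -smulA Hw.
by rewrite -psw -{1}prw smulA Hp prw.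
Qed.

Lemma grading_conj_agree s r w : phi s = phi r -> idem w ->
  leS w (sinv s ⊙ s) -> leS w (sinv r ⊙ r) -> s ⊙ w ⊙ sinv s = r ⊙ w ⊙ sinv r.
Proof. by move=> Hsr Hw ws wr; rewrite !(conjE _ Hw) (grading_agree Hsr Hw ws wr). Qed.

Lemma grading_conj_sinv_agree s r w : s <> szero -> r <> szero -> phi s = phi r -> idem w ->
  leS w (s ⊙ sinv s) -> leS w (r ⊙ sinv r) -> sinv s ⊙ w ⊙ s = sinv r ⊙ w ⊙ r.
Proof.
move=> ns nr Hsr Hw ws wr.
have := @grading_conj_agree (sinv s) (sinv r) w; rewrite !sinvK !grade_sinv // Hsr.
by apply.
Qed.

Lemma Eg_idem g x : Eg phi g x -> idem x. Proof. by case. Qed.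

Lemma Eg0 g : Eg phi g szero. Proof. by split; [exact: idem0 | left]. Qed.

Lemma Eg_down g x y : Eg phi g x -> idem y -> leS y x -> Eg phi g y.
Proof.
move=> [Hx [->|[s [ns gs xs]]]] Hy yx; split=> //; first by left; exact: leS0.
by right; exists s; split=> //; exact: leS_trans xs.
Qed.

Lemma EgM g x y : Eg phi g x -> Eg phi g y -> Eg phi g (x ⊙ y).
Proof.
move=> Hx Hy; apply: (Eg_down Hx); first exact: idemM (Eg_idem Hx) (Eg_idem Hy).
exact: leS_mull (Eg_idem Hx) (Eg_idem Hy).
Qed.

Lemma Eg_semil g : meet_subsemilattice (Eg phi g).
Proof. by split=> [x /Eg_idem||x y] //; [exact: Eg0 | exact: EgM]. Qed.

Lemma Eg_fcover_embedding g : fcover_embedding (Eg phi g) (@Eset S) id.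
Proof.
split=> //; [exact: Eg_semil | exact: Eset_semil |].
move=> x C Px [H1 H2]; rewrite map_id; split=> [c Hc|y Py ny yx].
  by have [Pc cx] := H1 c Hc; split; [exact: Eg_idem Pc | exact: cx].
by apply: H2 => //; exact: Eg_down Px Py yx.
Qed.

Lemma Eg_conj g s x : s <> szero -> phi s = g -> idem x -> Eg phi g (s ⊙ x ⊙ sinv s).
Proof.
by move=> ns gs Hx; split; [exact: conj_idem | right; exists s; split=> //; exact: conj_le].
Qed.

Lemma Eg_conj_sinv g s x : s <> szero -> phi s = g -> idem x ->
  Eg phi (ginv g) (sinv s ⊙ x ⊙ s).
Proof.
move=> ns gs Hx; have := Eg_conj (sinv_neq0 ns) (etrans (grade_sinv ns) (f_equal ginv gs)) Hx.
by rewrite sinvK.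
Qed.

Lemma Eg_witness g x : Eg phi g x -> x <> szero ->
  exists s, [/\ s <> szero, phi s = g & leS x (s ⊙ sinv s)].
Proof. by move=> [_ [//|H]]. Qed.

Section PhimgConjFilter.
Variables (g : G) (t : S) (xi : set S).
Hypotheses (Hxi : is_filter (@Eset S) xi) (nt : t <> szero) (gt : phi t = g)
  (xit : xi (t ⊙ sinv t)).

Lemma phimg_conj_filter_sub :
  phimg phi g (conj_filter xi t `&` Eg phi (ginv g)) `<=` pullback (Eg phi g) id xi.
Proof.
move=> _ [x [q [[cx Egx] nq gq xq ->]]].
have Hx := Eg_idem Egx; split; first exact: Eg_conj.
have [_ [z0 [xiz0 z0t z0x]]] := cx.
have Hz0 : idem z0 by apply: (filter_sub Hxi).
pose v := sinv t ⊙ z0 ⊙ t; have Hv : idem v := conj_sinv_idem t Hz0.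
pose w := v ⊙ x; have Hw : idem w := idemM Hv Hx.
have wq : leS w (sinv q ⊙ q) := leS_trans (leS_mulr v Hx) xq.
have wt : leS w (sinv t ⊙ t) := leS_trans (leS_mull Hv Hx) (conj_sinv_le t Hz0).
have xitw : xi (t ⊙ w ⊙ sinv t).
  rewrite /w -conj_mulE // /v conj_cancel //.
  exact: filter_meet Hxi xiz0 (conj_filter_back Hxi cx).
apply: filter_up Hxi xitw (conj_idem q Hx) _.
rewrite (grading_conj_agree (etrans gt (esym gq)) Hw wt wq).
exact: conj_mono Hw (leS_mulr v Hx).
Qed.

Lemma phimg_conj_filter_sup :
  pullback (Eg phi g) id xi `<=` phimg phi g (conj_filter xi t `&` Eg phi (ginv g)).
Proof.
move=> y [Egy xiy].
have [q [nq gq yq]] := Eg_witness Egy (filter_neq0 Hxi xiy).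
have Hy := Eg_idem Egy.
exists (sinv q ⊙ y ⊙ q), q; split=> //; last 2 first.
- exact: conj_sinv_le.
- by rewrite conj_cancel.
split; last exact: Eg_conj_sinv.
split; first exact: conj_sinv_idem.
pose w := y ⊙ (t ⊙ sinv t); have Hw : idem w := idemM Hy (idem_ssinv t).
have wt : leS w (t ⊙ sinv t) := leS_mulr y (idem_ssinv t).
exists w; split=> //; first exact: filter_meet Hxi xiy xit.
have wq : leS w (q ⊙ sinv q) := leS_trans (leS_mull Hy (idem_ssinv t)) yq.
rewrite (grading_conj_sinv_agree nt nq (etrans gt (esym gq)) Hw wt wq).
exact: conj_sinv_mono Hw (leS_mull Hy (idem_ssinv t)).
Qed.

Lemma phimg_conj_filter :
  phimg phi g (conj_filter xi t `&` Eg phi (ginv g)) = pullback (Eg phi g) id xi.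
Proof. by apply/seteqP; split; [exact: phimg_conj_filter_sub | exact: phimg_conj_filter_sup]. Qed.

End PhimgConjFilter.
End Grading.

Lemma Iid_Tc (G : Grp) (S : InvSemigroup) (phi : S -> G) g U : Iid phi g U -> Tc (@Eset S) U.
Proof. by move=> [U' [HU' ->]]; exact: (Tmap_Tc (Eg_fcover_embedding phi g) HU'). Qed.

(* The domain of the ideal [Iid phi g]: the tight filters meeting [E_g]. *)
Definition dom_Eg (G : Grp) (S : InvSemigroup) (phi : S -> G) g : set (set S) :=
  [set zeta | Tight (@Eset S) zeta /\ exists x, Eg phi g x /\ zeta x].

Lemma Iid_dom (G : Grp) (S : InvSemigroup) (phi : S -> G) g U :
  Iid phi g U -> U `<=` dom_Eg phi g.
Proof. by move=> [U' [HU' ->]] zeta [H1 H2 H3]. Qed.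

Lemma homog_inj (G : Grp) (S : InvSemigroup) (R : comPzRingType) (g : G) (c d : set S -> R) :
  homog g c = homog g d -> c = d.
Proof. by move=> /(congr1 (fun F => F g)); rewrite /homog asboolT. Qed.

Local Open Scope ring_scope.
Import GRing.Theory.

Section LocallyConstant.
Variables (S1 S2 : InvSemigroup) (iota : S1 -> S2) (R : comPzRingType).
Local Notation E1 := (@Eset S1).
Local Notation E2 := (@Eset S2).
Implicit Types (c d : set S1 -> R).

Definition theta c : set S2 -> R := fun xi =>
  if `[< Tight E2 xi /\ pullback E1 iota xi !=set0 >] then c (pullback E1 iota xi) else 0.

Lemma theta_preimage c (r : R) : r != 0 ->
  theta c @^-1` [set r] = Tmap E1 E2 iota (c @^-1` [set r]).
Proof.
move=> nr; apply/seteqP; split=> xi; rewrite /= /theta.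
  case: asboolP => [[T E] Hr|_ H0]; first exact/TmapE.
  by rewrite -H0 eqxx in nr.
by move=> /TmapE [T E Hr]; rewrite asboolT.
Qed.

Lemma theta0 : theta (fun _ : set S1 => 0) = (fun _ : set S2 => 0).
Proof. by apply: funext => xi; rewrite /theta; case: ifP. Qed.

Lemma thetaD c d : theta (fun xi => c xi + d xi) = (fun xi => theta c xi + theta d xi).
Proof. by apply: funext => xi; rewrite /theta; case: ifP => _ //; rewrite addr0. Qed.

Lemma thetaM c d : theta (fun xi => c xi * d xi) = (fun xi => theta c xi * theta d xi).
Proof. by apply: funext => xi; rewrite /theta; case: ifP => _ //; rewrite mulr0. Qed.

Lemma thetaZ (r : R) c : theta (fun xi => r * c xi) = (fun xi => r * theta c xi).
Proof. by apply: funext => xi; rewrite /theta; case: ifP => _ //; rewrite mulr0. Qed.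

Lemma theta_homog (G : Grp) (g : G) c : (fun t => theta (homog g c t)) = homog g (theta c).
Proof. by apply: funext => t; rewrite /homog; case: ifP => _ //; exact: theta0. Qed.

Lemma theta_homog_inj (G : Grp) (g : G) c (d : set S2 -> R) :
  (fun t => theta (homog g c t)) = homog g d -> d = theta c.
Proof. by move=> E; apply/esym/(homog_inj (g := g)); rewrite -E theta_homog. Qed.

End LocallyConstant.

Lemma psit_dom (G : Grp) (S : InvSemigroup) (phi : S -> G) (R : comPzRingType) g
    (h : set S -> R) zeta :
  psit phi g h zeta != 0 -> dom_Eg phi g zeta.
Proof. by rewrite /psit; case: xgetP => [r _ [_ [T E _]] _ | _]; [split | rewrite eqxx]. Qed.

Lemma LcR_dom (G : Grp) (S : InvSemigroup) (phi : S -> G) (R : comPzRingType) g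
    (c : set S -> R) zeta :
  LcR (Iid phi g) c -> c zeta != 0 -> dom_Eg phi g zeta.
Proof. by move=> [_ Hpre] nz; apply: (Iid_dom (Hpre _ nz)). Qed.

Section SubsemigroupGrading.
Variables (G : Grp) (S1 S2 : InvSemigroup) (phi : S2 -> G) (iota : S1 -> S2).
Hypotheses (Hphi : pure_grading phi) (Hinj : injective iota) (Hzero : iota szero = szero)
  (Hmul : forall a b, iota (a ⊙ b) = iota a ⊙ iota b)
  (Hcov : preserves_fcovers (@Eset S1) (@Eset S2) iota).
Local Notation phi1 := (fun s : S1 => phi (iota s)).
Local Notation E1 := (@Eset S1).
Local Notation E2 := (@Eset S2).
Local Notation Tmap := (Tmap E1 E2 iota).
Implicit Types (s r x y : S1) (g : G).

Lemma iota_sinv s : iota (sinv s) = sinv (iota s).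
Proof. by apply: sinv_uniq; rewrite -!Hmul ?sinv_l ?sinv_r. Qed.

Lemma iota_neq0 s : s <> szero -> iota s <> szero.
Proof. by move=> ns e; apply: ns; apply: Hinj; rewrite e Hzero. Qed.

Lemma iota_idem x : idem (iota x) <-> idem x.
Proof. by rewrite /idem -Hmul; split=> [/Hinj|->]. Qed.

Lemma iota_conj s x : iota (s ⊙ x ⊙ sinv s) = iota s ⊙ iota x ⊙ sinv (iota s).
Proof. by rewrite !Hmul iota_sinv. Qed.

Lemma phi1_pure : pure_grading phi1.
Proof.
split=> [a b nab|s ns]; first by rewrite Hmul; apply: Hphi.1; rewrite -Hmul; exact: iota_neq0.
by rewrite -iota_idem; apply: Hphi.2; exact: iota_neq0.
Qed.

Lemma Eset_embedding : fcover_embedding E1 E2 iota.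
Proof. by split=> //; exact: Eset_semil. Qed.

Lemma Eg_iota g x : Eg phi1 g x -> Eg phi g (iota x).
Proof.
move=> [Hx Hor]; split; first exact/iota_idem.
case: Hor => [->|[s [ns gs xs]]]; first by left.
right; exists (iota s); split=> //; first exact: iota_neq0.
by rewrite -iota_sinv -Hmul; exact: (emb_leS Eset_embedding xs).
Qed.

Lemma Eg_embedding g : fcover_embedding (Eg phi1 g) (Eg phi g) iota.
Proof.
split=> //; [exact: Eg_semil | exact: Eg_semil |].
move=> x C Px Hc; have := Eg_fcover_embedding phi1 g; case=> _ _ _ _ _ /(_ x C Px Hc).
rewrite map_id => /(Hcov (Eg_idem Px)) [H1 H2].
split=> [c /lin_map [c' [Hc' <-]]|y Py ny yx]; last by apply: H2 => //; exact: Eg_idem Py.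
split; last by case: (H1 (iota c')) => //; apply/lin_map; exists c'.
exact/Eg_iota/(Hc.1 c' Hc').1.
Qed.

Lemma pullback_Eg_iota g (xi : set S2) :
  pullback (Eg phi1 g) id (pullback E1 iota xi) =
  pullback (Eg phi1 g) iota (pullback (Eg phi g) id xi).
Proof.
apply/seteqP; split=> x [Hx [_ H]]; split=> //; split=> //; first exact: Eg_iota.
exact: Eg_idem Hx.
Qed.

Lemma Iid_Tmap g U : Iid phi1 g U -> Iid phi g (Tmap U).
Proof.
move=> [U' [HU' ->]].
exists (Defs.Tmap (Eg phi1 g) (Eg phi g) iota U'); split.
  exact: (Tmap_Tc (Eg_embedding g) HU').
apply/seteqP; split=> xi /TmapE [Txi [x [_ xix]] /TmapE [_ [x' [Egx' [_ xix']]] HU'x]].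
- have Hex : pullback (Eg phi g) id xi !=set0.
    by exists (iota x'); split=> //; exact: (Eg_iota Egx').
  apply/TmapE; split=> //; apply/TmapE; split.
  + exact: (pullback_tight (Eg_fcover_embedding phi g) Txi Hex).
  + by exists x'; split=> //; split=> //; exact: (Eg_iota Egx').
  + by rewrite -pullback_Eg_iota.
- have Hex : pullback E1 iota xi !=set0 by exists x'; split=> //; exact: (Eg_idem Egx').
  apply/TmapE; split=> //; apply/TmapE; split.
  + exact: (pullback_tight Eset_embedding Txi Hex).
  + by exists x'; split=> //; split=> //; exact: (Eg_idem Egx').
  + by rewrite pullback_Eg_iota.
Qed.

Section TmapPsiSub.
Variables (g : G) (xi : set S2) (zeta : set S1) (s x : S1).
Hypotheses (Hxi : is_filter E2 xi) (Hzeta : is_filter E1 zeta)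
  (Hrel : phimg phi1 g (zeta `&` Eg phi1 (ginv g)) = pullback (Eg phi1 g) id (pullback E1 iota xi))
  (zx : zeta x) (Egx : Eg phi1 (ginv g) x) (ns : s <> szero) (gs : phi1 s = g)
  (xs : leS x (sinv s ⊙ s)).

Lemma pullback_conj_filter_sub : pullback E1 iota (conj_filter xi (iota s)) `<=` zeta.
Proof.
move=> y [Ey cy]; have Hx : idem x by apply: (filter_sub Hzeta).
have : pullback (Eg phi1 g) id (pullback E1 iota xi) (s ⊙ y ⊙ sinv s).
  split; first exact: Eg_conj.
  by split; [exact: conj_idem | rewrite iota_conj; exact: (conj_filter_back Hxi cy)].
rewrite -Hrel => -[x' [r [[zx' Egx'] nr gr x'r E]]].
have Hx' : idem x' by apply: (filter_sub Hzeta).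
pose w := x ⊙ x'; have Hw : idem w := idemM Hx Hx'.
have ws : leS w (sinv s ⊙ s) := leS_trans (leS_mull Hx Hx') xs.
have wr : leS w (sinv r ⊙ r) := leS_trans (leS_mulr x Hx') x'r.
have le1 : leS (s ⊙ w ⊙ sinv s) (s ⊙ y ⊙ sinv s).
  rewrite (grading_conj_agree phi1_pure (etrans gs (esym gr)) Hw ws wr) E.
  exact: conj_mono Hw (leS_mulr x Hx').
have := conj_sinv_mono s (conj_idem s Hw) le1.
rewrite !conj_back // -(idemC Hw (idem_sinvs s)) ws => le2.
exact: filter_up Hzeta (filter_meet Hzeta zx zx') Ey (leS_trans le2 (leS_mulr _ Ey)).
Qed.

Lemma pullback_conj_filter_sup : zeta `<=` pullback E1 iota (conj_filter xi (iota s)).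
Proof.
move=> y zy; have Ey : idem y by apply: (filter_sub Hzeta).
have Hx : idem x by apply: (filter_sub Hzeta).
have Hyx : idem (iota (y ⊙ x)) by apply/iota_idem/idemM.
split=> //; split; first exact/iota_idem.
exists (iota (s ⊙ (y ⊙ x) ⊙ sinv s)); rewrite iota_conj; split.
- have : pullback (Eg phi1 g) id (pullback E1 iota xi) (s ⊙ (y ⊙ x) ⊙ sinv s).
    rewrite -Hrel; exists (y ⊙ x), s; split=> //; last exact: leS_trans (leS_mulr y Hx) xs.
    split; first exact: filter_meet Hzeta zy zx.
    exact: Eg_down Egx (idemM Ey Hx) (leS_mulr y Hx).
  by move=> [_ [_]]; rewrite iota_conj.
- exact: conj_le.
- rewrite conj_back //; apply: leS_trans (leS_mulr _ Hyx) _.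
  exact: (emb_leS Eset_embedding (leS_mull Ey Hx)).
Qed.

Lemma pullback_conj_filter : pullback E1 iota (conj_filter xi (iota s)) = zeta.
Proof.
by apply/seteqP; split; [exact: pullback_conj_filter_sub | exact: pullback_conj_filter_sup].
Qed.

End TmapPsiSub.

(* Conjugation by [iota s] pulls [xi] back to a tight filter whose pullback
   to [E1] is the filter [zeta] that [psi phi1 g] moves to [xi]. *)
Lemma Tmap_psi_sub g V : V `<=` dom_Eg phi1 (ginv g) ->
  Tmap (psi phi1 g V) `<=` psi phi g (Tmap V).
Proof.
move=> HV xi /TmapE [Txi _ /TmapE [_ [a [Ega [_ xia]]]]] [e [zeta [Vzeta Ee]] Hrel].
subst e.
have [[Hzeta _] _] := HV _ Vzeta.
have : phimg phi1 g (zeta `&` Eg phi1 (ginv g)) a.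
  by rewrite Hrel; split=> //; split=> //; exact: (Eg_idem Ega).
move=> [x [s [[zx Egx] ns gs xs Ea]]].
have Hx : idem x by apply: (filter_sub Hzeta).
move: xia; rewrite Ea iota_conj => xia.
have xit : xi (iota s ⊙ sinv (iota s)).
  exact: (filter_up Txi.1 xia (idem_ssinv _) (conj_le _ ((iota_idem _).2 Hx))).
have Hb := pullback_conj_filter Txi.1 Hzeta Hrel zx Egx ns gs xs.
apply/TmapE; split=> //.
  exists (iota (s ⊙ x ⊙ sinv s)); split; first exact: (Eg_iota (Eg_conj ns gs Hx)).
  by rewrite iota_conj.
exists (conj_filter xi (iota s) `&` Eg phi (ginv g)).
  exists (conj_filter xi (iota s)); split=> //.
  apply/TmapE; split; first exact: conj_filter_tight.
    by rewrite Hb; exists x.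
  by rewrite Hb.
exact: (phimg_conj_filter Hphi Txi.1 (iota_neq0 ns) gs xit).
Qed.

Section PsiTmapSub.
Variables (g : G) (xi zeta' : set S2).
Hypotheses (Hxi : is_filter E2 xi) (Hzeta' : is_filter E2 zeta')
  (Hrel : phimg phi g (zeta' `&` Eg phi (ginv g)) = pullback (Eg phi g) id xi).

Lemma phimg_pullback_in x r : pullback E1 iota zeta' x -> Eg phi1 (ginv g) x ->
  r <> szero -> phi1 r = g -> leS x (sinv r ⊙ r) -> xi (iota (r ⊙ x ⊙ sinv r)).
Proof.
move=> zx Egx nr gr xr.
have : pullback (Eg phi g) id xi (iota (r ⊙ x ⊙ sinv r)).
  rewrite -Hrel iota_conj; exists (iota x), (iota r); split=> //.
  - by split; [exact: zx.2 | exact: (Eg_iota Egx)].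
  - exact: iota_neq0.
  - by rewrite -iota_sinv -Hmul; exact: (emb_leS Eset_embedding xr).
by case.
Qed.

Lemma pullback_phimg_sub :
  phimg phi1 g (pullback E1 iota zeta' `&` Eg phi1 (ginv g)) `<=`
  pullback (Eg phi1 g) id (pullback E1 iota xi).
Proof.
move=> _ [x [r [[zx Egx] nr gr xr ->]]].
have Hx : idem x by case: zx.
by split; [exact: Eg_conj | split; [exact: conj_idem | exact: phimg_pullback_in]].
Qed.

(* [iota y] is [q x q^*] for some [x] in [zeta'], and [u^* (iota y) u = x]
   for [u := iota r] as [u] and [q] have the same degree. *)
Lemma pullback_phimg_sup :
  pullback (Eg phi1 g) id (pullback E1 iota xi) `<=`
  phimg phi1 g (pullback E1 iota zeta' `&` Eg phi1 (ginv g)).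
Proof.
move=> y [Egy [Ey xiy]].
have ny : y <> szero by move=> y0; apply: (filter_not0 Hxi); rewrite -Hzero -y0.
have [r [nr gr yr]] := Eg_witness Egy ny.
exists (sinv r ⊙ y ⊙ r), r; split=> //; last 2 first.
- exact: conj_sinv_le.
- by rewrite conj_cancel.
split; last exact: (Eg_conj_sinv phi1_pure nr gr Ey).
split; first exact: conj_sinv_idem.
have : pullback (Eg phi g) id xi (iota y) by split=> //; exact: (Eg_iota Egy).
rewrite -Hrel => -[x [q [[zx _] nq gq xq Ey']]].
have Hx : idem x by apply: (filter_sub Hzeta').
have Hw : idem (iota y) by exact/iota_idem.
have wq : leS (iota y) (q ⊙ sinv q) by rewrite Ey'; exact: conj_le.
have wu : leS (iota y) (iota r ⊙ sinv (iota r)).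
  by rewrite -iota_sinv -Hmul; exact: (emb_leS Eset_embedding yr).
rewrite !Hmul iota_sinv.
rewrite (grading_conj_sinv_agree Hphi (iota_neq0 nr) nq (etrans gr (esym gq)) Hw wu wq).
by rewrite Ey' conj_back // (idemC (idem_sinvs q) Hx) xq.
Qed.

Lemma pullback_phimg :
  phimg phi1 g (pullback E1 iota zeta' `&` Eg phi1 (ginv g)) =
  pullback (Eg phi1 g) id (pullback E1 iota xi).
Proof. by apply/seteqP; split; [exact: pullback_phimg_sub | exact: pullback_phimg_sup]. Qed.

End PsiTmapSub.

Lemma psi_Tmap_sub g V : V `<=` dom_Eg phi1 (ginv g) ->
  psi phi g (Tmap V) `<=` Tmap (psi phi1 g V).
Proof.
move=> HV xi /TmapE [Txi _] [e [zeta' [Tz' Ee]] Hrel]; subst e.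
move: Tz' => /TmapE [Tz' _ Vz].
have [Tz [y0 [Egy0 zy0]]] := HV _ Vz.
have [r [nr gr y0r]] := Eg_witness Egy0 (filter_neq0 Tz.1 zy0).
have ns : sinv r <> szero := sinv_neq0 nr.
have gs : phi1 (sinv r) = g by rewrite (grade_sinv phi1_pure nr) gr ginvK.
have y0s : leS y0 (sinv (sinv r) ⊙ sinv r) by rewrite sinvK.
have Hy0 : idem y0 := Eg_idem Egy0.
have xia := phimg_pullback_in Hrel zy0 Egy0 ns gs y0s.
have Ega : Eg phi1 g (sinv r ⊙ y0 ⊙ sinv (sinv r)) := Eg_conj ns gs Hy0.
have Hex : pullback E1 iota xi !=set0.
  by exists (sinv r ⊙ y0 ⊙ sinv (sinv r)); split=> //; case: Ega.
apply/TmapE; split=> //; apply/TmapE; split.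
- exact: (pullback_tight Eset_embedding Txi Hex).
- by exists (sinv r ⊙ y0 ⊙ sinv (sinv r)); split=> //; split=> //; case: Ega.
- exists (pullback E1 iota zeta' `&` Eg phi1 (ginv g)); first by exists (pullback E1 iota zeta').
  exact: (pullback_phimg Txi.1 Tz'.1 Hrel).
Qed.

Lemma Tmap_psi g V : V `<=` dom_Eg phi1 (ginv g) ->
  Tmap (psi phi1 g V) = psi phi g (Tmap V).
Proof. by move=> HV; apply/seteqP; split; [exact: Tmap_psi_sub | exact: psi_Tmap_sub]. Qed.

Variable R : comPzRingType.
Implicit Types (c d : set S1 -> R).

Lemma theta_psit g c : (forall zeta, c zeta != 0 -> dom_Eg phi1 (ginv g) zeta) ->
  theta iota (psit phi1 g c) = psit phi g (theta iota c).
Proof.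
move=> Hc; apply: funext => xi; rewrite /psit /theta.
have Hpre (r : R) : r != 0 -> c @^-1` [set r] `<=` dom_Eg phi1 (ginv g).
  by move=> nr zeta /= czr; apply: Hc; rewrite czr.
have -> : [set r | r != 0 /\ psi phi g (theta iota c @^-1` [set r]) xi] =
    [set r | r != 0 /\ Tmap (psi phi1 g (c @^-1` [set r])) xi].
  apply/seteqP; split=> r [nr H]; split=> //;
    by move: H; rewrite theta_preimage // -Tmap_psi //; exact: Hpre.
case: asboolP => [[T E]|nT].
  by congr (xget 0); apply/seteqP; split=> r [nr H]; split=> //; case/TmapE: H.
by rewrite xgetPN // => r [_ /TmapE [T E _]]; apply: nT.
Qed.

Lemma theta_LcR g c : LcR (Iid phi1 g) c -> LcR (Iid phi g) (theta iota c).
Proof.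
move=> [[l Hl] Hpre]; split.
  exists (0 :: l) => xi; rewrite /theta; case: ifP => _; rewrite inE ?eqxx //.
  by rewrite Hl orbT.
by move=> r nr; rewrite theta_preimage //; exact: Iid_Tmap (Hpre r nr).
Qed.

Lemma theta_homprod (s : G) (a b : set S1 -> R) : LcR (Iid phi1 s) a ->
  theta iota (homprod phi1 s a b) = homprod phi s (theta iota a) (theta iota b).
Proof.
move=> Ha; rewrite /homprod theta_psit //; last first.
  move=> zeta; case: (eqVneq (psit phi1 (ginv s) a zeta) 0) => [->|nz _].
    by rewrite mul0r eqxx.
  exact: psit_dom nz.
rewrite thetaM theta_psit // => zeta nz.
by rewrite ginvK; exact: LcR_dom Ha nz.
Qed.

Lemma theta_inj g c d : LcR (Iid phi1 g) c -> LcR (Iid phi1 g) d ->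
  theta iota c = theta iota d -> c = d.
Proof.
move=> [_ Hc] [_ Hd] E.
have Hpre (r : R) : r != 0 -> c @^-1` [set r] = d @^-1` [set r].
  move=> nr; apply: (Tmap_inj Eset_embedding (Iid_Tc (Hc r nr)) (Iid_Tc (Hd r nr))).
  by rewrite -!theta_preimage // E.
apply: funext => eta; case: (eqVneq (c eta) 0) => [c0|cn0].
  case: (eqVneq (d eta) 0) => [d0|dn0]; first by rewrite c0 d0.
  by have : (d @^-1` [set d eta]) eta by []; rewrite -Hpre // /= => ->.
by have : (c @^-1` [set c eta]) eta by []; rewrite Hpre // /= => ->.
Qed.

Lemma theta_indic g x : Eg phi1 g x ->
  theta iota (indic R (Vset E1 x [::])) = indic R (Vset E2 (iota x) [::]).
Proof.
move=> Egx; have Ex : E1 x := Eg_idem Egx.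
apply: funext => xi; rewrite /theta /indic.
have [V2|nV2] := pselect (Vset E2 (iota x) [::] xi); last first.
  rewrite (asboolF nV2); case: asboolP => // -[T _].
  by rewrite asboolF // => -[_ [[_ xix] _]]; apply: nV2; split=> //; split=> // y [].
have [Txi [xix _]] := V2; have Ep : pullback E1 iota xi !=set0 by exists x.
have Tp := pullback_tight Eset_embedding Txi Ep.
by rewrite (asboolT (conj Txi Ep)) (asboolT V2) asboolT //; split=> //; split=> // y [].
Qed.

End SubsemigroupGrading.

Unset Implicit Arguments.
Theorem mainTheorem18 (G : Grp) (S1 S2 : InvSemigroup) (phi : S2 -> G)
  (iota : S1 -> S2)
  (Hphi : pure_grading phi)
  (Hinj : injective iota)
  (Hzero : iota szero = szero)
  (Hmul : forall a b, iota (smul a b) = smul (iota a) (iota b))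
  (Hcov : preserves_fcovers (@Eset S1) (@Eset S2) iota) :
  let phi1 : S1 -> G := fun s => phi (iota s) in
  let f := Tmap (@Eset S1) (@Eset S2) iota in
  ((forall U, Tc (@Eset S1) U -> Tc (@Eset S2) (f U)) /\
   f set0 = set0 /\
   (forall U V, Tc (@Eset S1) U -> Tc (@Eset S1) V ->
      [/\ f (U `|` V) = f U `|` f V, f (U `&` V) = f U `&` f V &
          f (U `\` V) = f U `\` f V]) /\
   (forall U V, Tc (@Eset S1) U -> Tc (@Eset S1) V -> f U = f V -> U = V) /\
   (forall g : G, forall U, Iid phi1 g U -> Iid phi g (f U)) /\
   (forall g : G, forall U, Iid phi1 (ginv g) U -> f (psi phi1 g U) = psi phi g (f U))) /\
  (forall R : comPzRingType,
   exists Theta : (G -> set S1 -> R) -> (G -> set S2 -> R),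
   (forall a, LR phi1 a -> LR phi (Theta a)) /\
       (forall a b, LR phi1 a -> LR phi1 b ->
          Theta (LRadd a b) = LRadd (Theta a) (Theta b)) /\
       (forall (r : R) a, LR phi1 a -> Theta (LRscale r a) = LRscale r (Theta a)) /\
       (forall (g : G) a, LcR (Iid phi1 g) a ->
          exists b, LcR (Iid phi g) b /\ Theta (homog g a) = homog g b) /\
       (forall (s t : G) a b a' b', LcR (Iid phi1 s) a -> LcR (Iid phi1 t) b ->
          Theta (homog s a) = homog s a' -> Theta (homog t b) = homog t b' ->
          Theta (homog (gmul s t) (homprod phi1 s a b)) = homog (gmul s t) (homprod phi s a' b')) /\
       (forall a b, LR phi1 a -> LR phi1 b -> Theta a = Theta b -> a = b) /\
       (forall (g : G) (x : S1), Eg phi1 g x ->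
          Theta (xdelta R g x) = xdelta R g (iota x))).
Proof.
move=> phi1 f; subst phi1 f; have HE := Eset_embedding Hinj Hzero Hmul Hcov.
split.
  split; first by move=> U; exact: (Tmap_Tc HE).
  split; first exact: Tmap0.
  split; first by move=> U V _ _; split; [exact: TmapU | exact: TmapI | exact: TmapD].
  split; first by move=> U V; exact: (Tmap_inj HE).
  split; first by move=> g U; exact: Iid_Tmap.
  by move=> g U /Iid_dom HU; apply: Tmap_psi.
move=> R; exists (fun a g => theta iota (a g)).
split.
  move=> a [[l Hl] Ha]; split; last by move=> g; exact: theta_LcR.
  by exists l => g /Hl ->; exact: theta0.
split; first by move=> a b _ _; apply: funext => g; exact: thetaD.
split; first by move=> r a _; apply: funext => g; exact: thetaZ.
split.
  by move=> g a Ha; exists (theta iota a); split; [exact: theta_LcR | exact: theta_homog].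
split.
  move=> s t a b a' b' Ha _ /theta_homog_inj -> /theta_homog_inj ->.
  by rewrite -theta_homprod //; exact: theta_homog.
split.
  move=> a b [_ Ha] [_ Hb] E; apply: funext => g.
  exact: theta_inj (Ha g) (Hb g) (congr1 (fun F => F g) E).
by move=> g x Egx; rewrite /xdelta theta_homog (theta_indic _ _ _ _ _ Egx).
Qed.
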